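(* Let $\mu:[0,1)\to(0,\infty)$ be decreasing and continuous with $\lim_{r\to1^-}\mu(r)=0$, and suppose there is $B>0$ such that $\mu(1-d/2)\ge B\,\mu(1-d)$ for all $d\in(0,1]$. Let $u(z)=\operatorname{Re}\sum_k a_{n_k}z^{n_k}$ be a Hadamard gap series ($n_k$ positive integers, $n_{k+1}\ge\lambda n_k$, $\lambda>1$) converging in $\mathbb{D}$. Then $u\in\mathcal{B}_\mu$ if and only if there is $C$ such that $\sum_{n_k\le N}n_k|a_{n_k}|\le \dfrac{C}{\mu(1-1/N)}$ for all $N\in\mathbb{N}$.
   Context: The Bloch-type space $\mathcal{B}_\mu$ is the set of harmonic functions $u$ on the unit disk $\mathbb{D}$ with $\|u\|_{\mathcal{B}_\mu}=\sup_{z\in\mathbb{D}}\big(|u(0)|+\mu(|z|)\,|\nabla u(z)|\big)<\infty$. *)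

From Stdlib Require Import Reals.
Open Scope R_scope.

(* (x + i y)^n as a pair (real part, imaginary part) *)
Fixpoint cpow (x y : R) (n : nat) : R * R :=
  match n with
  | O => (1, 0)
  | S m => let (p, q) := cpow x y m in (p * x - q * y, p * y + q * x)
  end.

(* real and imaginary parts of (ar + i ai) * (x + i y)^n *)
Definition re_term (ar ai x y : R) (n : nat) : R :=
  ar * fst (cpow x y n) - ai * snd (cpow x y n).
Definition im_term (ar ai x y : R) (n : nat) : R :=
  ar * snd (cpow x y n) + ai * fst (cpow x y n).

Definition in_Bloch_mu (mu : R -> R) (u : R -> R -> R) : Prop :=
  exists M : R, forall x y : R, x * x + y * y < 1 ->
    exists ux uy : R,
      derivable_pt_lim (fun t => u t y) x ux /\
      derivable_pt_lim (fun t => u x t) y uy /\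
      Rabs (u 0 0) + mu (sqrt (x * x + y * y)) * sqrt (ux * ux + uy * uy) <= M.

(* Write z = r e^(i th) and a_(n_k) = |a_(n_k)| e^(i phi_k).  The gradient of u has modulus
   |sum_k n_k a_(n_k) z^(n_k - 1)|, dominated termwise by D(r) = sum_k n_k |a_(n_k)| r^(n_k - 1).

   Sufficiency: take N0 ~ 1 / (1 - r) and cut D(r) into the blocks of frequencies in
   (2^(p j) N0, 2^(p (j+1)) N0].  Iterating the doubling condition and using that mu decreases,
   mu (1 - 2^(-p (j+1)) / N0) >= B^(p (j+1)) mu r, so the hypothesis bounds block j by
   r^(2^(p j) N0) C / (B^(p (j+1)) mu r).  Since r^N0 <= 2/3, for p large the factor
   r^(2^(p j) N0) <= (2/3)^(2^(p j)) is at most (B^p / 2)^j, and the blocks sum to O(C / mu r).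

   Necessity: at r = 1 - 1/(2N) one has r^N >= 1/2, so the sum over n_k <= N is at most
   2 sum_k n_k |a_(n_k)| r^(n_k).  Split the indices k into q residue classes, q so large that
   along each class the frequencies grow at least by lam^q > 1 + lam / (lam - 1).  On a class
   the Riesz product prod_i (1 + cos (n_(k_i) th + phi_(k_i))) is nonnegative with mean 1, and
   pairing it with r d/dr u (r e^(i th)) = Re sum_k n_k a_(n_k) z^(n_k) <= |grad u| <= M / mu r
   yields half of sum_i n_(k_i) |a_(n_(k_i))| r^(n_(k_i)).  Circle means are replaced by
   averages over L-th roots of unity, exact for these trigonometric polynomials.  Finally
   doubling gives mu r >= B mu (1 - 1/N). *)

From Stdlib Require Import Reals Ranalysis5 Lra Lia Psatz ClassicalEpsilon ZArith.
Open Scope R_scope.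

(** * Series *)

Lemma series_cv_dominated (F D : nat -> R) (l : R) :
  (forall k, Rabs (F k) <= D k) -> Un_cv (fun N => sum_f_R0 D N) l ->
  exists e, Un_cv (fun N => sum_f_R0 F N) e.
Proof.
  intros HD Hl.
  pose proof (Rseries_CV_comp (fun k => Rabs (F k)) D
                (fun k => conj (Rabs_pos _) (HD k)) (exist _ l Hl)) as Habs.
  destruct (cv_cauchy_2 _ (cauchy_abs _ (cv_cauchy_1 _ Habs))) as [e He].
  now exists e.
Qed.

Lemma Un_cv_const c : Un_cv (fun _ => c) c.
Proof. intros eps Heps. exists O. intros. unfold Rdist. rewrite Rminus_diag, Rabs_R0. lra. Qed.

(* The sum of a series; an arbitrary value when the series diverges. *)
Definition series_sum (s : nat -> R) : R :=
  epsilon (inhabits 0) (fun l => Un_cv (fun N => sum_f_R0 s N) l).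

Lemma series_sum_cv s : (exists l, Un_cv (fun N => sum_f_R0 s N) l) ->
  Un_cv (fun N => sum_f_R0 s N) (series_sum s).
Proof. intros H; unfold series_sum; apply epsilon_spec; exact H. Qed.

Lemma Rabs_le_inv x a : Rabs x <= a -> - a <= x <= a.
Proof. unfold Rabs. destruct Rcase_abs; intros; lra. Qed.

Lemma series_terms_bounded (s : nat -> R) l : Un_cv (fun N => sum_f_R0 s N) l ->
  exists K, forall k, Rabs (s k) <= K.
Proof.
  intro H. destruct (maj_by_pos _ (exist _ l H)) as [K [HK0 HK]].
  exists (2 * K). intros [|k].
  - specialize (HK 0%nat). simpl in HK. lra.
  - pose proof (HK (S k)) as H1. pose proof (HK k) as H2. simpl in H1.
    apply Rabs_le_inv in H1. apply Rabs_le_inv in H2. apply Rabs_le. lra.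
Qed.

Lemma sum_f_R0_le_mono (f : nat -> R) K K' : (forall i, 0 <= f i) -> (K <= K')%nat ->
  sum_f_R0 f K <= sum_f_R0 f K'.
Proof. intros Hf H. induction H; [lra|]. simpl. specialize (Hf (S m)). lra. Qed.

Lemma sum_f_R0_stable (f : nat -> R) N K :
  (forall i, (N < i <= K)%nat -> f i = 0) -> (N <= K)%nat ->
  sum_f_R0 f K = sum_f_R0 f N.
Proof.
  intros Hf H. induction H; [reflexivity|]. simpl.
  rewrite IHle, (Hf (S m)) by (intros; try apply Hf; lia). ring.
Qed.

Lemma telescope_le (a b : nat -> R) A :
  a O <= A -> (forall j, a (S j) - a j <= b j) -> forall J, a (S J) <= A + sum_f_R0 b J.
Proof.
  intros H0 Hs J. induction J; simpl.
  - specialize (Hs O). lra.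
  - specialize (Hs (S J)). lra.
Qed.

Lemma sum_pow_half_le J : sum_f_R0 (fun j => (/ 2) ^ j) J <= 2.
Proof.
  rewrite tech3 by lra. assert (0 < (/ 2) ^ S J) by (apply pow_lt; lra).
  replace ((1 - (/ 2) ^ S J) / (1 - / 2)) with (2 - 2 * (/ 2) ^ S J) by field. lra.
Qed.

Lemma sum_tele (g : nat -> R) (n : nat) :
  sum_f_R0 (fun j => g (S j) - g j) n = g (S n) - g O.
Proof. induction n; simpl; [ring | rewrite IHn; ring]. Qed.

Lemma sum_f_R0_indicator (v : nat -> R) p K :
  sum_f_R0 (fun k => if Nat.eqb k p then v k else 0) K = if Nat.leb p K then v p else 0.
Proof.
  induction K as [|K IH].
  - destruct p; reflexivity.
  - rewrite tech5, IH. destruct (Nat.leb_spec p K), (Nat.eqb_spec (S K) p), (Nat.leb_spec p (S K));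
      subst; try lia; ring.
Qed.

Fixpoint sum_below (g : nat -> R) (t : nat) : R :=
  match t with O => 0 | S t' => sum_below g t' + g t' end.

Lemma sum_below_S (g : nat -> R) N : sum_below g (S N) = sum_f_R0 g N.
Proof. induction N; simpl in *; [ring | rewrite IHN; ring]. Qed.

Lemma sum_below_ext (f g : nat -> R) t : (forall i, (i < t)%nat -> f i = g i) ->
  sum_below f t = sum_below g t.
Proof.
  intro H. induction t; simpl; [reflexivity|].
  rewrite IHt, H by (intros; try apply H; lia). reflexivity.
Qed.

Lemma sum_below_le (f g : nat -> R) t : (forall i, (i < t)%nat -> f i <= g i) ->
  sum_below f t <= sum_below g t.
Proof.
  intro H. induction t; simpl; [lra|].
  apply Rplus_le_compat; [apply IHt; intros; apply H | apply H]; lia.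
Qed.

Lemma sum_below_plus (f g : nat -> R) t :
  sum_below (fun i => f i + g i) t = sum_below f t + sum_below g t.
Proof. induction t; simpl; [ring | rewrite IHt; ring]. Qed.

Lemma sum_below_scal (f : nat -> R) c t : sum_below (fun i => c * f i) t = c * sum_below f t.
Proof. induction t; simpl; [ring | rewrite IHt; ring]. Qed.

Lemma sum_below_const c t : sum_below (fun _ => c) t = INR t * c.
Proof. induction t; simpl sum_below; [simpl; ring | rewrite IHt, S_INR; ring]. Qed.

Lemma sum_below_le_mono (g : nat -> R) a b : (forall i, 0 <= g i) -> (a <= b)%nat ->
  sum_below g a <= sum_below g b.
Proof. intros Hg H. induction H; [lra|]. simpl. pose proof (Hg m). lra. Qed.

Lemma sum_below_add (g : nat -> R) a b :
  sum_below g (a + b) = sum_below g a + sum_below (fun j => g (a + j)%nat) b.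
Proof.
  induction b; simpl; [rewrite Nat.add_0_r; ring|].
  rewrite Nat.add_succ_r. simpl. rewrite IHb. ring.
Qed.

Lemma sum_below_classes (w : nat -> R) q m :
  sum_below w (q * m) = sum_below (fun j => sum_below (fun i => w (j + i * q)%nat) m) q.
Proof.
  induction m.
  - rewrite Nat.mul_0_r. simpl. rewrite sum_below_const. ring.
  - replace (q * S m)%nat with (q * m + q)%nat by lia.
    rewrite sum_below_add, IHm, <- sum_below_plus.
    apply sum_below_ext. intros j Hj. simpl. do 2 f_equal. lia.
Qed.

Lemma derivable_pt_lim_sum_f_R0 (F F' : nat -> R -> R) (t : R) (N : nat) :
  (forall k, derivable_pt_lim (F k) t (F' k t)) ->
  derivable_pt_lim (fun s => sum_f_R0 (fun k => F k s) N) t (sum_f_R0 (fun k => F' k t) N).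
Proof.
  intros H. induction N; simpl.
  - apply H.
  - apply (derivable_pt_lim_plus (fun s => sum_f_R0 (fun k => F k s) N) (F (S N))); auto.
Qed.

Lemma continuity_pt_sum_f_R0 (F : nat -> R -> R) (t : R) (N : nat) :
  (forall k, continuity_pt (F k) t) ->
  continuity_pt (fun s => sum_f_R0 (fun k => F k s) N) t.
Proof.
  intros H. induction N; simpl.
  - apply H.
  - apply (continuity_pt_plus (fun s => sum_f_R0 (fun k => F k s) N) (F (S N))); auto.
Qed.

Lemma derivable_pt_lim_series (F F' : nat -> R -> R) (D : nat -> R) (f : R -> R) (x d lD : R) :
  0 < d ->
  (forall k t, Rabs (t - x) < d -> derivable_pt_lim (F k) t (F' k t)) ->
  (forall k t, Rabs (t - x) < d -> continuity_pt (F' k) t) ->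
  (forall k t, Rabs (t - x) < d -> Rabs (F' k t) <= D k) ->
  Un_cv (fun N => sum_f_R0 D N) lD ->
  (forall t, Rabs (t - x) < d -> Un_cv (fun N => sum_f_R0 (fun k => F k t) N) (f t)) ->
  derivable_pt_lim f x (series_sum (fun k => F' k x)).
Proof.
  intros Hd HF' HFc HB HlD Hf.
  set (r := mkposreal d Hd).
  set (g := fun t => series_sum (fun k => F' k t)).
  assert (Hg : forall t, Rabs (t - x) < d ->
            Un_cv (fun N => sum_f_R0 (fun k => F' k t) N) (g t)).
  { intros t Ht. apply series_sum_cv.
    eapply series_cv_dominated; [|exact HlD]. intro k; apply HB; auto. }
  assert (HCVU : CVU (fun N t => sum_f_R0 (fun k => F' k t) N) g x r).
  { intros eps Heps. destruct (HlD eps Heps) as [N HN]. exists N. intros m t Hm Ht.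
    unfold Boule in Ht; simpl in Ht.
    eapply Rle_lt_trans.
    - apply (sum_maj1 F' D t (g t) lD m); auto. apply Hg; auto.
    - specialize (HN m Hm). unfold Rdist in HN. apply Rabs_def2 in HN. lra. }
  apply (derivable_pt_lim_CVU (fun N t => sum_f_R0 (fun k => F k t) N)
           (fun N t => sum_f_R0 (fun k => F' k t) N) f g x x r).
  - unfold Boule; simpl. rewrite Rminus_diag, Rabs_R0; auto.
  - intros t N Ht. apply derivable_pt_lim_sum_f_R0. intro k; apply HF'; auto.
  - intros t Ht; apply Hf; auto.
  - exact HCVU.
  - intros t Ht. apply (CVU_continuity _ _ _ _ HCVU); auto.
    intros N t' Ht'. apply continuity_pt_sum_f_R0. intro k; apply HFc; auto.
Qed.

Lemma pow_le_one w m : 0 <= w <= 1 -> w ^ m <= 1.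
Proof.
  intro H. induction m; simpl; [lra|]. pose proof (pow_le w m (proj1 H)). nra.
Qed.

Lemma Rle_pow_le_one w m p : 0 <= w <= 1 -> (m <= p)%nat -> w ^ p <= w ^ m.
Proof.
  intros H Hmp. replace p with (m + (p - m))%nat by lia. rewrite pow_add.
  pose proof (pow_le_one w (p - m) H). pose proof (pow_le w m (proj1 H)). nra.
Qed.

Lemma pow_one_minus_ge d N : 0 <= d <= 1 -> 1 - INR N * d <= (1 - d) ^ N.
Proof.
  intro Hd. induction N; [simpl; lra|].
  rewrite S_INR. simpl pow. pose proof (pos_INR N). pose proof (pow_le (1 - d) N ltac:(lra)). nra.
Qed.

Lemma pow_pred_mul_le_geometric s : 0 <= s < 1 ->
  exists C t, 0 <= C /\ 0 < t < 1 /\ forall m, INR m * s ^ pred m <= C * t ^ pred m.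
Proof.
  intro Hs.
  set (t := (1 + s) / 2). set (h := (t - s) / t). set (v := s / t).
  assert (Ht : 0 < t < 1) by (unfold t; lra).
  assert (Hts : s < t) by (unfold t; lra).
  assert (Hh : 0 < h) by (unfold h; apply Rdiv_lt_0_compat; lra).
  assert (Hv : 0 <= v) by (unfold v; apply Rmult_le_pos; [lra | left; apply Rinv_0_lt_compat; lra]).
  assert (Hvh : v * (1 + h) <= 1).
  { unfold v, h. replace (s / t * (1 + (t - s) / t)) with (1 - ((t - s) / t) ^ 2) by (field; lra).
    pose proof (pow2_ge_0 ((t - s) / t)). lra. }
  exists (1 + / h), t. split; [pose proof (Rinv_0_lt_compat h Hh); lra|]. split; [exact Ht|].
  intros [|m].
  - simpl. pose proof (Rinv_0_lt_compat h Hh). lra.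
  - simpl pred. rewrite S_INR.
    replace s with (v * t) by (unfold v; field; lra). rewrite Rpow_mult_distr.
    (* Bernoulli: (1 + h)^m >= 1 + m h, while (v (1 + h))^m <= 1. *)
    pose proof (poly m h Hh) as Hb.
    pose proof (pow_le_one (v * (1 + h)) m ltac:(nra)) as H1. rewrite Rpow_mult_distr in H1.
    pose proof (pow_le v m Hv). pose proof (pow_le t m ltac:(lra)). pose proof (pos_INR m).
    assert (Hvm : v ^ m * (1 + INR m * h) <= 1) by nra.
    assert (E : INR m + 1 <= (1 + / h) * (1 + INR m * h)).
    { assert (h * / h = 1) by (field; lra). pose proof (Rinv_0_lt_compat h Hh). nra. }
    assert (Hvm' : (INR m + 1) * v ^ m <= 1 + / h).
    { apply Rle_trans with ((1 + / h) * (1 + INR m * h) * v ^ m); [nra|].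
      pose proof (Rinv_0_lt_compat h Hh). nra. }
    nra.
Qed.

Lemma nat_mul_le_pow b j : (2 <= b)%nat -> (b * j <= b ^ j)%nat.
Proof.
  intro Hb. assert (H : forall j, (j + 1 <= b ^ j)%nat) by (induction j0; simpl; nia).
  destruct j; simpl; [lia|]. specialize (H j). nia.
Qed.

Lemma nat_sqr_le_pow2 p : (4 <= p)%nat -> (p * p <= 2 ^ p)%nat.
Proof. intro H. induction H; simpl; nia. Qed.

Lemma exists_nat_floor x : 1 <= x -> exists N : nat, (1 <= N)%nat /\ INR N <= x < INR N + 1.
Proof.
  intro Hx. destruct (archimed x) as [H1 H2].
  assert (Hz : (1 < up x)%Z) by (apply lt_IZR; lra).
  exists (Z.to_nat (up x) - 1)%nat.
  assert (E : INR (Z.to_nat (up x)) = IZR (up x))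
    by (rewrite INR_IZR_INZ, Z2Nat.id; [reflexivity | lia]).
  rewrite minus_INR, E by lia. simpl. split; [lia | lra].
Qed.

Lemma pow_le_two_thirds s N : 0 <= s < 1 -> 1 / (1 - s) < INR N + 1 -> s ^ N <= 2 / 3.
Proof.
  intros Hs HN. set (d := 1 - s) in *.
  assert (Hd : 0 < d) by (unfold d; lra).
  assert (HNd : s < INR N * d).
  { apply Rmult_lt_reg_r with (/ d); [apply Rinv_0_lt_compat; lra|].
    rewrite Rmult_assoc, Rinv_r by lra. unfold Rdiv in HN.
    replace (s * / d) with (1 * / d - 1) by (unfold d; field; lra). lra. }
  (* s (1 + d) = 1 - d^2 <= 1, and Bernoulli gives (1 + d)^N >= 1 + N d > 1 + s. *)
  pose proof (poly N d Hd) as Hb.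
  pose proof (pow_le_one (s * (1 + d)) N ltac:(unfold d; split; nra)) as Hp.
  rewrite Rpow_mult_distr in Hp. pose proof (pow_le s N (proj1 Hs)).
  assert (Hsd : s ^ N * (1 + s) <= 1) by nra.
  destruct (Rle_lt_dec (1 / 2) s); [nra|].
  destruct N as [|N]; [simpl in HNd; lra|].
  pose proof (Rle_pow_le_one s 1 (S N) ltac:(lra) ltac:(lia)). simpl in *. lra.
Qed.

Lemma exists_block_exponent B : 0 < B ->
  exists p : nat, (1 <= p)%nat /\ (2 / 3) ^ (2 ^ p) <= B ^ p / 2.
Proof.
  intro HB.
  destruct (pow_lt_1_zero (2 / 3) ltac:(rewrite Rabs_right; lra) (B / 2) ltac:(lra)) as [p0 Hp0].
  exists (p0 + 4)%nat. set (p := (p0 + 4)%nat). split; [unfold p; lia|].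
  assert (Hgp : (2 / 3) ^ p <= B / 2).
  { specialize (Hp0 p ltac:(unfold p; lia)).
    rewrite Rabs_right in Hp0 by (apply Rle_ge, pow_le; lra). lra. }
  apply Rle_trans with ((2 / 3) ^ (p * p)).
  { apply Rle_pow_le_one; [lra|]. apply nat_sqr_le_pow2; unfold p; lia. }
  rewrite pow_mult. apply Rle_trans with ((B / 2) ^ p).
  { apply pow_incr. split; auto. apply pow_le; lra. }
  unfold Rdiv. rewrite Rpow_mult_distr.
  assert ((/ 2) ^ p <= / 2).
  { replace p with (S (p0 + 3)) by (unfold p; lia). simpl.
    pose proof (pow_le_one (/ 2) (p0 + 3) ltac:(lra)).
    pose proof (pow_le (/ 2) (p0 + 3) ltac:(lra)). nra. }
  assert (0 < B ^ p) by (apply pow_lt; lra). nra.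
Qed.

Lemma sum_sqr_nonneg x y : 0 <= x * x + y * y.
Proof. nra. Qed.

Lemma sqrt_pow z m : 0 <= z -> sqrt (z ^ m) = sqrt z ^ m.
Proof.
  intro Hz. induction m; simpl; [apply sqrt_1|].
  rewrite sqrt_mult; [rewrite IHm; reflexivity | auto | apply pow_le; auto].
Qed.

Lemma sqrt_sum_sqr_lt_1 x y : x * x + y * y < 1 -> 0 <= sqrt (x * x + y * y) < 1.
Proof.
  intro H. split; [apply sqrt_pos|]. rewrite <- sqrt_1.
  apply sqrt_lt_1_alt. split; [apply sum_sqr_nonneg | lra].
Qed.

Lemma sum_sqr_lt_1_of_sqrt z : 0 <= z -> sqrt z < 1 -> z < 1.
Proof.
  intros Hz H. destruct (Rlt_le_dec z 1) as [|H1]; auto.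
  apply sqrt_le_1_alt in H1. rewrite sqrt_1 in H1. lra.
Qed.

Lemma Rabs_le_sqrt_sum_sqr u v : Rabs u <= sqrt (u ^ 2 + v ^ 2).
Proof. rewrite <- sqrt_Rsqr_abs. apply sqrt_le_1_alt. unfold Rsqr. nra. Qed.

Lemma sqrt_sum_sqr_le_Rabs u v : sqrt (u ^ 2 + v ^ 2) <= Rabs u + Rabs v.
Proof.
  pose proof (Rabs_pos u); pose proof (Rabs_pos v).
  rewrite <- (sqrt_Rsqr (Rabs u + Rabs v)) by lra.
  apply sqrt_le_1_alt. unfold Rsqr. rewrite <- (pow2_abs u), <- (pow2_abs v). nra.
Qed.

Lemma Cauchy_Schwarz_R2 e1 e2 t1 t2 :
  e1 * e1 + e2 * e2 <= 1 -> e1 * t1 + e2 * t2 <= sqrt (t1 ^ 2 + t2 ^ 2).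
Proof.
  intro He. apply Rle_trans with (Rabs (e1 * t1 + e2 * t2)); [apply Rle_abs|].
  rewrite <- sqrt_Rsqr_abs. apply sqrt_le_1_alt. unfold Rsqr.
  assert (Lagrange : (e1 * t1 + e2 * t2) * (e1 * t1 + e2 * t2) + (e1 * t2 - e2 * t1) ^ 2
      = (e1 * e1 + e2 * e2) * (t1 ^ 2 + t2 ^ 2)) by ring.
  pose proof (pow2_ge_0 (e1 * t2 - e2 * t1)).
  assert (0 <= (1 - (e1 * e1 + e2 * e2)) * (t1 ^ 2 + t2 ^ 2)) by (apply Rmult_le_pos; nra).
  nra.
Qed.

Lemma norm_add_x_le x y h : sqrt ((x + h) * (x + h) + y * y) <= Rabs h + sqrt (x * x + y * y).
Proof.
  set (S := sqrt (x * x + y * y)).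
  assert (HS : 0 <= S) by apply sqrt_pos.
  assert (HS2 : S * S = x * x + y * y) by (apply sqrt_sqrt; nra).
  assert (Hx : x * h <= Rabs h * S).
  { apply Rle_trans with (Rabs x * Rabs h); [rewrite <- Rabs_mult; apply Rle_abs|].
    rewrite Rmult_comm. apply Rmult_le_compat_l; [apply Rabs_pos|].
    rewrite <- sqrt_Rsqr_abs. apply sqrt_le_1_alt. unfold Rsqr. nra. }
  rewrite <- (sqrt_Rsqr (Rabs h + S)) by (pose proof (Rabs_pos h); lra).
  apply sqrt_le_1_alt. unfold Rsqr.
  assert (Rabs h * Rabs h = h * h) by (rewrite <- Rabs_mult; apply Rabs_right; nra).
  nra.
Qed.

Lemma norm_add_y_le x y h : sqrt (x * x + (y + h) * (y + h)) <= Rabs h + sqrt (x * x + y * y).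
Proof. rewrite (Rplus_comm (x * x)), (Rplus_comm (x * x)). apply norm_add_x_le. Qed.

(** * Powers of x + i y *)

Lemma cpow_S x y n : cpow x y (S n) =
  (fst (cpow x y n) * x - snd (cpow x y n) * y, fst (cpow x y n) * y + snd (cpow x y n) * x).
Proof. simpl. destruct (cpow x y n); reflexivity. Qed.

Lemma cpow_norm x y n : fst (cpow x y n) ^ 2 + snd (cpow x y n) ^ 2 = (x * x + y * y) ^ n.
Proof.
  induction n; [simpl; ring|].
  rewrite cpow_S; cbn [fst snd]. simpl pow. rewrite <- IHn. ring.
Qed.

Lemma cpow_polar r th n :
  cpow (r * cos th) (r * sin th) n = (r ^ n * cos (INR n * th), r ^ n * sin (INR n * th)).
Proof.
  induction n.
  - simpl. rewrite Rmult_0_l, cos_0, sin_0. f_equal; ring.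
  - rewrite cpow_S, IHn; cbn [fst snd]. rewrite S_INR.
    replace ((INR n + 1) * th) with (INR n * th + th) by ring.
    rewrite cos_plus, sin_plus. simpl pow. f_equal; ring.
Qed.

Lemma cpow_real x n : cpow x 0 n = (x ^ n, 0).
Proof.
  induction n; [reflexivity|]. rewrite cpow_S, IHn; cbn [fst snd]. simpl pow. f_equal; ring.
Qed.

(* n z^(n-1) z = n z^n; the factor n makes this hold also for n = 0, where pred 0 = 0. *)
Lemma cpow_pred_mul x y n :
  INR n * (fst (cpow x y (pred n)) * x - snd (cpow x y (pred n)) * y) = INR n * fst (cpow x y n) /\
  INR n * (fst (cpow x y (pred n)) * y + snd (cpow x y (pred n)) * x) = INR n * snd (cpow x y n).
Proof. destruct n; [simpl; split; ring | simpl pred; rewrite cpow_S; split; reflexivity]. Qed.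

Lemma derivable_pt_lim_cpow_x y x n :
  derivable_pt_lim (fun t => fst (cpow t y n)) x (INR n * fst (cpow x y (pred n))) /\
  derivable_pt_lim (fun t => snd (cpow t y n)) x (INR n * snd (cpow x y (pred n))).
Proof.
  induction n as [|n [IH1 IH2]].
  - simpl. rewrite !Rmult_0_l. split; apply derivable_pt_lim_const.
  - destruct (cpow_pred_mul x y n) as [E1 E2]. simpl pred. rewrite S_INR.
    split.
    + apply derivable_pt_lim_ext with (fun t => fst (cpow t y n) * t - snd (cpow t y n) * y).
      { intro t; rewrite cpow_S; reflexivity. }
      replace ((INR n + 1) * fst (cpow x y n))
        with (INR n * fst (cpow x y (pred n)) * x + fst (cpow x y n) * 1
              - (INR n * snd (cpow x y (pred n)) * y + snd (cpow x y n) * 0)) by lra.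
      apply derivable_pt_lim_minus.
      * apply (derivable_pt_lim_mult (fun t => fst (cpow t y n)) id);
          [exact IH1 | apply derivable_pt_lim_id].
      * apply (derivable_pt_lim_mult (fun t => snd (cpow t y n)) (fun _ => y));
          [exact IH2 | apply derivable_pt_lim_const].
    + apply derivable_pt_lim_ext with (fun t => fst (cpow t y n) * y + snd (cpow t y n) * t).
      { intro t; rewrite cpow_S; reflexivity. }
      replace ((INR n + 1) * snd (cpow x y n))
        with (INR n * fst (cpow x y (pred n)) * y + fst (cpow x y n) * 0
              + (INR n * snd (cpow x y (pred n)) * x + snd (cpow x y n) * 1)) by lra.
      apply derivable_pt_lim_plus.
      * apply (derivable_pt_lim_mult (fun t => fst (cpow t y n)) (fun _ => y));
          [exact IH1 | apply derivable_pt_lim_const].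
      * apply (derivable_pt_lim_mult (fun t => snd (cpow t y n)) id);
          [exact IH2 | apply derivable_pt_lim_id].
Qed.

Lemma derivable_pt_lim_cpow_y x y n :
  derivable_pt_lim (fun t => fst (cpow x t n)) y (- (INR n * snd (cpow x y (pred n)))) /\
  derivable_pt_lim (fun t => snd (cpow x t n)) y (INR n * fst (cpow x y (pred n))).
Proof.
  induction n as [|n [IH1 IH2]].
  - simpl. rewrite !Rmult_0_l, Ropp_0. split; apply derivable_pt_lim_const.
  - destruct (cpow_pred_mul x y n) as [E1 E2]. simpl pred. rewrite S_INR.
    split.
    + apply derivable_pt_lim_ext with (fun t => fst (cpow x t n) * x - snd (cpow x t n) * t).
      { intro t; rewrite cpow_S; reflexivity. }
      replace (- ((INR n + 1) * snd (cpow x y n)))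
        with (- (INR n * snd (cpow x y (pred n))) * x + fst (cpow x y n) * 0
              - (INR n * fst (cpow x y (pred n)) * y + snd (cpow x y n) * 1)) by lra.
      apply derivable_pt_lim_minus.
      * apply (derivable_pt_lim_mult (fun t => fst (cpow x t n)) (fun _ => x));
          [exact IH1 | apply derivable_pt_lim_const].
      * apply (derivable_pt_lim_mult (fun t => snd (cpow x t n)) id);
          [exact IH2 | apply derivable_pt_lim_id].
    + apply derivable_pt_lim_ext with (fun t => fst (cpow x t n) * t + snd (cpow x t n) * x).
      { intro t; rewrite cpow_S; reflexivity. }
      replace ((INR n + 1) * fst (cpow x y n))
        with (- (INR n * snd (cpow x y (pred n))) * y + fst (cpow x y n) * 1
              + (INR n * fst (cpow x y (pred n)) * x + snd (cpow x y n) * 0)) by lra.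
      apply derivable_pt_lim_plus.
      * apply (derivable_pt_lim_mult (fun t => fst (cpow x t n)) id);
          [exact IH1 | apply derivable_pt_lim_id].
      * apply (derivable_pt_lim_mult (fun t => snd (cpow x t n)) (fun _ => x));
          [exact IH2 | apply derivable_pt_lim_const].
Qed.

Lemma derivable_pt_lim_re_term_x a c y x n :
  derivable_pt_lim (fun t => re_term a c t y n) x (INR n * re_term a c x y (pred n)).
Proof.
  destruct (derivable_pt_lim_cpow_x y x n) as [H1 H2]. unfold re_term.
  replace (INR n * (a * fst (cpow x y (pred n)) - c * snd (cpow x y (pred n))))
    with (a * (INR n * fst (cpow x y (pred n))) - c * (INR n * snd (cpow x y (pred n)))) by ring.
  apply derivable_pt_lim_minus; apply derivable_pt_lim_scal; assumption.
Qed.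

Lemma derivable_pt_lim_re_term_y a c x y n :
  derivable_pt_lim (fun t => re_term a c x t n) y (- (INR n * im_term a c x y (pred n))).
Proof.
  destruct (derivable_pt_lim_cpow_y x y n) as [H1 H2]. unfold re_term, im_term.
  replace (- (INR n * (a * snd (cpow x y (pred n)) + c * fst (cpow x y (pred n)))))
    with (a * - (INR n * snd (cpow x y (pred n))) - c * (INR n * fst (cpow x y (pred n)))) by ring.
  apply derivable_pt_lim_minus; apply derivable_pt_lim_scal; assumption.
Qed.

Lemma derivable_pt_lim_im_term_y a c x y n :
  derivable_pt_lim (fun t => im_term a c x t n) y (INR n * re_term a c x y (pred n)).
Proof.
  destruct (derivable_pt_lim_cpow_y x y n) as [H1 H2]. unfold re_term, im_term.
  replace (INR n * (a * fst (cpow x y (pred n)) - c * snd (cpow x y (pred n))))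
    with (a * (INR n * fst (cpow x y (pred n))) + c * - (INR n * snd (cpow x y (pred n)))) by ring.
  apply derivable_pt_lim_plus; apply derivable_pt_lim_scal; assumption.
Qed.

Definition cmod (a c : R) : R := sqrt (a ^ 2 + c ^ 2).

Lemma cmod_nonneg a c : 0 <= cmod a c.
Proof. apply sqrt_pos. Qed.

Lemma cmod_sqr a c : cmod a c * cmod a c = a ^ 2 + c ^ 2.
Proof. apply sqrt_sqrt. pose proof (pow2_ge_0 a); pose proof (pow2_ge_0 c); lra. Qed.

Lemma cmod_eq_0 a c : cmod a c = 0 -> a = 0 /\ c = 0.
Proof.
  intro H. pose proof (cmod_sqr a c) as E. rewrite H in E.
  pose proof (pow2_ge_0 a); pose proof (pow2_ge_0 c). split; nra.
Qed.

Lemma cmod_normalized a c :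
  (a / cmod a c) * (a / cmod a c) + (- c / cmod a c) * (- c / cmod a c) <= 1.
Proof.
  destruct (Req_dec (cmod a c) 0) as [H|H].
  - rewrite H. unfold Rdiv. rewrite Rinv_0. lra.
  - right. field_simplify; [|exact H]. rewrite <- cmod_sqr. field. exact H.
Qed.

Lemma cmod_pairing a c : a * (a / cmod a c / 2) - c * (- c / cmod a c / 2) = cmod a c / 2.
Proof.
  destruct (Req_dec (cmod a c) 0) as [H|H].
  - destruct (cmod_eq_0 a c H); subst. rewrite H. unfold Rdiv. ring.
  - field_simplify; [|exact H]. rewrite <- cmod_sqr. field. exact H.
Qed.

Lemma term_modulus a c x y m :
  sqrt (re_term a c x y m ^ 2 + im_term a c x y m ^ 2)
  = cmod a c * sqrt (x * x + y * y) ^ m.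
Proof.
  unfold cmod.
  replace (re_term a c x y m ^ 2 + im_term a c x y m ^ 2)
    with ((a ^ 2 + c ^ 2) * (x * x + y * y) ^ m)
    by (unfold re_term, im_term; rewrite <- cpow_norm; ring).
  rewrite sqrt_mult, sqrt_pow; auto using sum_sqr_nonneg, pow_le.
  pose proof (pow2_ge_0 a); pose proof (pow2_ge_0 c); lra.
Qed.

Lemma term_bound a c x y m r : sqrt (x * x + y * y) <= r ->
  Rabs (re_term a c x y m) <= cmod a c * r ^ m /\
  Rabs (im_term a c x y m) <= cmod a c * r ^ m.
Proof.
  intro Hr.
  assert (H : cmod a c * sqrt (x * x + y * y) ^ m <= cmod a c * r ^ m).
  { apply Rmult_le_compat_l; [apply cmod_nonneg|]. apply pow_incr. split; auto. apply sqrt_pos. }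
  rewrite <- term_modulus in H. split.
  - eapply Rle_trans; [apply Rabs_le_sqrt_sum_sqr | exact H].
  - eapply Rle_trans; [|exact H]. rewrite Rplus_comm. apply Rabs_le_sqrt_sum_sqr.
Qed.

Lemma re_term_polar r th m a c :
  re_term a c (r * cos th) (r * sin th) m = r ^ m * (a * cos (INR m * th) - c * sin (INR m * th)).
Proof. unfold re_term. rewrite cpow_polar. cbn [fst snd]. ring. Qed.

Lemma polar_sum_sqr r th : (r * cos th) * (r * cos th) + (r * sin th) * (r * sin th) = r * r.
Proof. pose proof (sin2_cos2 th). unfold Rsqr in H. nra. Qed.

(** * Discrete means and Riesz products *)

(* A discrete stand-in for the mean over the unit circle; it is exact on
   trigonometric polynomials of degree < L. *)
Definition grid_mean (L : nat) (F : R -> R) : R :=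
  sum_f_R0 (fun j => F (2 * PI * INR j / INR L)) (pred L) / INR L.

Definition is_int (f : R) : Prop := exists z, f = IZR z.

Lemma is_int_INR m : is_int (INR m).
Proof. exists (Z.of_nat m). apply INR_IZR_INZ. Qed.

Lemma is_int_plus f g : is_int f -> is_int g -> is_int (f + g).
Proof. intros [a ->] [b ->]. exists (a + b)%Z. symmetry; apply plus_IZR. Qed.

Lemma is_int_minus f g : is_int f -> is_int g -> is_int (f - g).
Proof. intros [a ->] [b ->]. exists (a - b)%Z. symmetry; apply minus_IZR. Qed.

Lemma is_int_opp f : is_int f -> is_int (- f).
Proof. intros [a ->]. exists (- a)%Z. symmetry; apply opp_IZR. Qed.

Section GridMean.
Variable L : nat.
Hypothesis L_pos : (1 <= L)%nat.

Lemma grid_mean_ext F G : (forall t, F t = G t) -> grid_mean L F = grid_mean L G.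
Proof. intro H. unfold grid_mean. f_equal. apply sum_eq. intros; apply H. Qed.

Lemma grid_mean_plus F G : grid_mean L (fun t => F t + G t) = grid_mean L F + grid_mean L G.
Proof. unfold grid_mean. rewrite plus_sum. unfold Rdiv. ring. Qed.

Lemma grid_mean_scal c F : grid_mean L (fun t => c * F t) = c * grid_mean L F.
Proof.
  unfold grid_mean. rewrite (sum_eq _ (fun j => F (2 * PI * INR j / INR L) * c)) by (intros; ring).
  rewrite <- scal_sum. unfold Rdiv. ring.
Qed.

Lemma grid_mean_sum (F : nat -> R -> R) K :
  grid_mean L (fun t => sum_f_R0 (fun k => F k t) K) = sum_f_R0 (fun k => grid_mean L (F k)) K.
Proof.
  induction K; [reflexivity|]. simpl. rewrite <- IHK.
  apply (grid_mean_plus (fun t => sum_f_R0 (fun k => F k t) K) (F (S K))).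
Qed.

Lemma grid_mean_le F G : (forall t, F t <= G t) -> grid_mean L F <= grid_mean L G.
Proof.
  intros H. unfold grid_mean, Rdiv. apply Rmult_le_compat_r.
  - left; apply Rinv_0_lt_compat; apply lt_0_INR; lia.
  - apply sum_Rle. intros; apply H.
Qed.

Lemma grid_mean_const c : grid_mean L (fun _ => c) = c.
Proof.
  unfold grid_mean. rewrite sum_cte. replace (S (pred L)) with L by lia.
  field. apply not_0_INR; lia.
Qed.

(* Both sums telescope after multiplication by 2 sin (a/2), a = 2 pi m / L. *)
Lemma sum_roots_of_unity m : (0 < m < L)%nat ->
  sum_f_R0 (fun j => cos (INR m * (2 * PI * INR j / INR L))) (pred L) = 0 /\
  sum_f_R0 (fun j => sin (INR m * (2 * PI * INR j / INR L))) (pred L) = 0.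
Proof.
  intro Hm.
  assert (HL : 0 < INR L) by (apply lt_0_INR; lia).
  assert (HmL : INR m < INR L) by (apply lt_INR; lia).
  assert (Hm0 : 0 < INR m) by (apply lt_0_INR; lia).
  pose proof PI_RGT_0.
  set (a := 2 * PI * INR m / INR L).
  assert (Hs : 0 < sin (a / 2)).
  { apply sin_gt_0; unfold a.
    - apply Rdiv_lt_0_compat; [|lra]. apply Rdiv_lt_0_compat; [nra | lra].
    - replace (2 * PI * INR m / INR L / 2) with (PI * (INR m / INR L)) by (field; lra).
      assert (INR m / INR L < 1) by (apply Rmult_lt_reg_r with (INR L); [lra|];
        unfold Rdiv; rewrite Rmult_assoc, Rinv_l by lra; lra).
      nra. }
  assert (E : forall j, INR m * (2 * PI * INR j / INR L) = INR j * a)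
    by (intro; unfold a; field; lra).
  assert (Hend : (INR L - / 2) * a = - (a / 2) + 2 * INR m * PI) by (unfold a; field; lra).
  assert (Hstart : (INR 0 - / 2) * a = - (a / 2)) by (simpl; field).
  rewrite !(sum_eq _ _ (pred L) (fun j _ => f_equal _ (E j))).
  split; apply Rmult_eq_reg_l with (2 * sin (a / 2)); try lra;
    rewrite Rmult_0_r, scal_sum.
  - rewrite (sum_eq _ (fun j => sin ((INR (S j) - /2) * a) - sin ((INR j - /2) * a))).
    2: { intros j _. rewrite S_INR.
         replace ((INR j + 1 - / 2) * a) with (INR j * a + a / 2) by field.
         replace ((INR j - / 2) * a) with (INR j * a - a / 2) by field.
         rewrite sin_plus, sin_minus. ring. }
    rewrite (sum_tele (fun j => sin ((INR j - /2) * a))). replace (S (pred L)) with L by lia.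
    rewrite Hend, Hstart, sin_period. ring.
  - rewrite (sum_eq _ (fun j => - cos ((INR (S j) - /2) * a) - - cos ((INR j - /2) * a))).
    2: { intros j _. rewrite S_INR.
         replace ((INR j + 1 - / 2) * a) with (INR j * a + a / 2) by field.
         replace ((INR j - / 2) * a) with (INR j * a - a / 2) by field.
         rewrite cos_plus, cos_minus. ring. }
    rewrite (sum_tele (fun j => - cos ((INR j - /2) * a))). replace (S (pred L)) with L by lia.
    rewrite Hend, Hstart, cos_period. ring.
Qed.

Lemma grid_mean_trig_int f : is_int f -> f <> 0 -> Rabs f < INR L ->
  grid_mean L (fun t => sin (f * t)) = 0 /\ grid_mean L (fun t => cos (f * t)) = 0.
Proof.
  intros [z ->] Hz Hlt.
  assert (Hm : INR (Z.abs_nat z) = Rabs (IZR z))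
    by (rewrite INR_IZR_INZ, Nat2Z.inj_abs_nat, <- abs_IZR; reflexivity).
  assert (Hpos : (0 < Z.abs_nat z < L)%nat).
  { split; apply INR_lt; rewrite Hm; simpl; [apply Rabs_pos_lt|]; assumption. }
  destruct (sum_roots_of_unity _ Hpos) as [Hc Hs].
  unfold grid_mean. rewrite Hm in Hc, Hs.
  unfold Rabs in Hc, Hs; destruct Rcase_abs.
  - rewrite (sum_eq _ (fun j => sin (- IZR z * (2 * PI * INR j / INR L)) * -1))
      by (intros; rewrite Ropp_mult_distr_l_reverse, sin_neg; ring).
    rewrite (sum_eq (fun j => cos (IZR z * (2 * PI * INR j / INR L)))
                    (fun j => cos (- IZR z * (2 * PI * INR j / INR L))))
      by (intros; rewrite Ropp_mult_distr_l_reverse, cos_neg; reflexivity).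
    rewrite <- scal_sum, Hs, Hc. unfold Rdiv. split; ring.
  - rewrite Hs, Hc. unfold Rdiv. split; ring.
Qed.
End GridMean.

Section RieszProduct.
Variables (n : nat -> nat) (ar ai : nat -> R) (kk : nat -> nat) (L : nat).
Hypothesis L_pos : (1 <= L)%nat.

Definition freq i := INR (n (kk i)).
Definition alpha i := ar (n (kk i)) / cmod (ar (n (kk i))) (ai (n (kk i))).
Definition beta i := - ai (n (kk i)) / cmod (ar (n (kk i))) (ai (n (kk i))).
(* With a_(n_(kk i)) = |a| e^(i phi), the factor is 1 + cos (freq i th + phi)
   (and 1 when a = 0, as x / 0 = 0). *)
Definition riesz_factor i th := 1 + alpha i * cos (freq i * th) + beta i * sin (freq i * th).
Fixpoint riesz_prod t th := match t with O => 1 | S t' => riesz_prod t' th * riesz_factor t' th end.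
Fixpoint freq_sum t := match t with O => 0 | S t' => freq_sum t' + freq t' end.
Definition riesz_cos t f := grid_mean L (fun th => cos (f * th) * riesz_prod t th).
Definition riesz_sin t f := grid_mean L (fun th => sin (f * th) * riesz_prod t th).

Lemma freq_nonneg i : 0 <= freq i.
Proof. apply pos_INR. Qed.

Lemma riesz_prod_nonneg t th : 0 <= riesz_prod t th.
Proof.
  induction t; simpl; [lra|]. apply Rmult_le_pos; auto.
  pose proof (cmod_normalized (ar (n (kk t))) (ai (n (kk t)))) as Hab.
  pose proof (Cauchy_Schwarz_R2 (- alpha t) (- beta t) (cos (freq t * th)) (sin (freq t * th)))
    as Hcs.
  assert (Hpyth : cos (freq t * th) ^ 2 + sin (freq t * th) ^ 2 = 1)
    by (pose proof (sin2_cos2 (freq t * th)); unfold Rsqr in *; lra).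
  rewrite Hpyth, sqrt_1 in Hcs.
  unfold riesz_factor, alpha, beta in *. nra.
Qed.

Lemma grid_mean5 F1 F2 F3 F4 F5 c2 c3 c4 c5 :
  grid_mean L (fun t => F1 t + c2 * F2 t + c3 * F3 t + c4 * F4 t + c5 * F5 t) =
  grid_mean L F1 + c2 * grid_mean L F2 + c3 * grid_mean L F3
  + c4 * grid_mean L F4 + c5 * grid_mean L F5.
Proof.
  rewrite (grid_mean_plus L (fun t => F1 t + c2 * F2 t + c3 * F3 t + c4 * F4 t)
                           (fun t => c5 * F5 t)).
  rewrite (grid_mean_plus L (fun t => F1 t + c2 * F2 t + c3 * F3 t) (fun t => c4 * F4 t)).
  rewrite (grid_mean_plus L (fun t => F1 t + c2 * F2 t) (fun t => c3 * F3 t)).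
  rewrite (grid_mean_plus L F1 (fun t => c2 * F2 t)).
  rewrite !grid_mean_scal. reflexivity.
Qed.

Lemma riesz_cos_S t f : riesz_cos (S t) f =
  riesz_cos t f + alpha t / 2 * riesz_cos t (f - freq t) + alpha t / 2 * riesz_cos t (f + freq t)
  + beta t / 2 * riesz_sin t (f + freq t) + (- (beta t / 2)) * riesz_sin t (f - freq t).
Proof.
  unfold riesz_cos, riesz_sin. rewrite <- grid_mean5. apply grid_mean_ext. intro th.
  simpl riesz_prod. unfold riesz_factor.
  rewrite !Rmult_minus_distr_r, !Rmult_plus_distr_r, cos_minus, cos_plus, sin_plus, sin_minus.
  field.
Qed.

Lemma riesz_sin_S t f : riesz_sin (S t) f =
  riesz_sin t f + alpha t / 2 * riesz_sin t (f + freq t) + alpha t / 2 * riesz_sin t (f - freq t)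
  + beta t / 2 * riesz_cos t (f - freq t) + (- (beta t / 2)) * riesz_cos t (f + freq t).
Proof.
  unfold riesz_cos, riesz_sin. rewrite <- grid_mean5. apply grid_mean_ext. intro th.
  simpl riesz_prod. unfold riesz_factor.
  rewrite !Rmult_minus_distr_r, !Rmult_plus_distr_r, cos_minus, cos_plus, sin_plus, sin_minus.
  field.
Qed.

(* The spectrum of riesz_prod t lies in [- freq_sum t, freq_sum t]; the grid of L
   points does not alias frequencies of modulus below L. *)
Lemma riesz_coef_vanish t : forall f, is_int f ->
  freq_sum t < Rabs f -> Rabs f + freq_sum t < INR L -> riesz_cos t f = 0 /\ riesz_sin t f = 0.
Proof.
  induction t; intros f Hf H1 H2.
  - simpl freq_sum in *. unfold riesz_cos, riesz_sin. simpl riesz_prod.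
    rewrite (grid_mean_ext L (fun th => sin (f * th) * 1) (fun th => sin (f * th))) by (intro; ring).
    rewrite (grid_mean_ext L (fun th => cos (f * th) * 1) (fun th => cos (f * th))) by (intro; ring).
    destruct (grid_mean_trig_int L L_pos f Hf) as [B1 B2];
      [intros ->; rewrite Rabs_R0 in H1; lra | lra |].
    rewrite B1, B2. split; reflexivity.
  - simpl freq_sum in *. pose proof (freq_nonneg t) as HN.
    assert (Hint : is_int (freq t)) by apply is_int_INR.
    assert (A1 : Rabs f - freq t <= Rabs (f + freq t) <= Rabs f + freq t)
      by (unfold Rabs; repeat destruct Rcase_abs; lra).
    assert (A2 : Rabs f - freq t <= Rabs (f - freq t) <= Rabs f + freq t)
      by (unfold Rabs; repeat destruct Rcase_abs; lra).
    destruct (IHt f Hf ltac:(lra) ltac:(lra)) as [E1 E2].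
    destruct (IHt (f - freq t) ltac:(apply is_int_minus; auto) ltac:(lra) ltac:(lra)) as [E3 E4].
    destruct (IHt (f + freq t) ltac:(apply is_int_plus; auto) ltac:(lra) ltac:(lra)) as [E5 E6].
    rewrite riesz_cos_S, riesz_sin_S, E1, E2, E3, E4, E5, E6. split; ring.
Qed.

Lemma riesz_cos_0 t :
  (forall i, (i < t)%nat -> freq_sum i < freq i /\ freq i + freq_sum i < INR L) ->
  riesz_cos t 0 = 1.
Proof.
  induction t; intro H.
  - unfold riesz_cos. simpl riesz_prod.
    rewrite (grid_mean_ext L _ (fun _ => 1)) by (intro; rewrite Rmult_0_l, cos_0; ring).
    apply grid_mean_const; auto.
  - destruct (H t (Nat.lt_succ_diag_r t)) as [H1 H2]. pose proof (freq_nonneg t).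
    assert (Hint : is_int (freq t)) by apply is_int_INR.
    rewrite riesz_cos_S, IHt by (intros; apply H; lia).
    rewrite Rminus_0_l, Rplus_0_l.
    destruct (riesz_coef_vanish t (- freq t) ltac:(apply is_int_opp; auto)
      ltac:(rewrite Rabs_Ropp, Rabs_right; lra)
      ltac:(rewrite Rabs_Ropp, Rabs_right; lra)) as [E1 E2].
    destruct (riesz_coef_vanish t (freq t) Hint
      ltac:(rewrite Rabs_right; lra) ltac:(rewrite Rabs_right; lra)) as [E3 E4].
    rewrite E1, E2, E3, E4. ring.
Qed.

Definition riesz_pairing t k :=
  ar (n k) * riesz_cos t (INR (n k)) - ai (n k) * riesz_sin t (INR (n k)).

Section Pairing.
Variables (K tmax : nat).
Hypothesis freq_lacunary :
  forall i, (i <= tmax)%nat -> freq_sum i < freq i /\ 2 * freq i + freq_sum i < INR L.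
Hypothesis freq_separated : forall i k, k <> kk i -> freq_sum i < Rabs (INR (n k) - freq i).
Hypothesis kk_le : forall i, (i < tmax)%nat -> (kk i <= K)%nat.
Hypothesis spectrum_lt_L :
  forall k i, (k <= K)%nat -> (i < tmax)%nat -> INR (n k) + freq i + freq_sum i < INR L.
Hypothesis n_pos_lt_L : forall k, (k <= K)%nat -> 0 < INR (n k) < INR L.

Lemma riesz_pairing_0 k : (k <= K)%nat -> riesz_pairing 0 k = 0.
Proof.
  intro Hk. destruct (n_pos_lt_L k Hk).
  unfold riesz_pairing, riesz_cos, riesz_sin. simpl riesz_prod.
  rewrite (grid_mean_ext L (fun th => sin (INR (n k) * th) * 1) (fun th => sin (INR (n k) * th)))
    by (intro; ring).
  rewrite (grid_mean_ext L (fun th => cos (INR (n k) * th) * 1) (fun th => cos (INR (n k) * th)))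
    by (intro; ring).
  destruct (grid_mean_trig_int L L_pos (INR (n k)) (is_int_INR _)) as [B1 B2];
    [lra | rewrite Rabs_right; lra |].
  rewrite B1, B2. ring.
Qed.

Lemma riesz_pairing_S t k : (t < tmax)%nat -> (k <= K)%nat ->
  riesz_pairing (S t) k =
  riesz_pairing t k + (if Nat.eqb k (kk t) then cmod (ar (n k)) (ai (n k)) / 2 else 0).
Proof.
  intros Ht Hk. pose proof (freq_nonneg t) as HN. pose proof (pos_INR (n k)) as Hn.
  pose proof (spectrum_lt_L k t Hk Ht) as Hspec.
  assert (Hint : is_int (freq t)) by apply is_int_INR.
  destruct (freq_lacunary t ltac:(lia)) as [Ht1 Ht2].
  unfold riesz_pairing. rewrite riesz_cos_S, riesz_sin_S.
  destruct (Nat.eqb_spec k (kk t)) as [Hkt|Hkt].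
  - subst k. fold (freq t).
    replace (freq t - freq t) with 0 by ring. replace (freq t + freq t) with (2 * freq t) by ring.
    assert (Z0 : riesz_cos t 0 = 1).
    { apply riesz_cos_0. intros i Hi. destruct (freq_lacunary i ltac:(lia)).
      pose proof (freq_nonneg i). lra. }
    assert (Z1 : riesz_sin t 0 = 0).
    { unfold riesz_sin.
      rewrite (grid_mean_ext L _ (fun _ => 0)) by (intro; rewrite Rmult_0_l, sin_0; ring).
      apply grid_mean_const; auto. }
    destruct (riesz_coef_vanish t (freq t) Hint
      ltac:(rewrite Rabs_right; lra) ltac:(rewrite Rabs_right; lra)) as [E1 E2].
    destruct (riesz_coef_vanish t (2 * freq t)
      ltac:(replace (2 * freq t) with (freq t + freq t) by ring; apply is_int_plus; auto)
      ltac:(rewrite Rabs_right; lra) ltac:(rewrite Rabs_right; lra)) as [E3 E4].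
    rewrite Z0, Z1, E1, E2, E3, E4, <- cmod_pairing. unfold alpha, beta. ring.
  - destruct (riesz_coef_vanish t (INR (n k) - freq t)
      ltac:(apply is_int_minus; auto using is_int_INR)
      (freq_separated t k Hkt) ltac:(unfold Rabs; repeat destruct Rcase_abs; lra)) as [E1 E2].
    destruct (riesz_coef_vanish t (INR (n k) + freq t)
      ltac:(apply is_int_plus; auto using is_int_INR)
      ltac:(rewrite Rabs_right; lra) ltac:(rewrite Rabs_right; lra)) as [E3 E4].
    rewrite E1, E2, E3, E4. ring.
Qed.

Lemma sum_riesz_pairing (W : nat -> R) t : (t <= tmax)%nat ->
  sum_f_R0 (fun k => W k * riesz_pairing t k) K
  = sum_below (fun i => W (kk i) * (cmod (ar (n (kk i))) (ai (n (kk i))) / 2)) t.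
Proof.
  induction t as [|t IH]; intro Ht.
  - simpl. rewrite (sum_eq _ (fun _ => 0)), sum_cte; [ring|].
    intros k Hk. rewrite riesz_pairing_0; auto; ring.
  - simpl sum_below. rewrite <- IH by lia.
    rewrite (sum_eq _ (fun k => W k * riesz_pairing t k
               + (if Nat.eqb k (kk t) then W k * (cmod (ar (n k)) (ai (n k)) / 2) else 0))).
    + rewrite plus_sum, sum_f_R0_indicator.
      destruct (Nat.leb_spec (kk t) K); [reflexivity|]. pose proof (kk_le t). lia.
    + intros k Hk. rewrite riesz_pairing_S by lia. destruct (Nat.eqb k (kk t)); ring.
Qed.

Lemma grid_mean_riesz_pairing (W : nat -> R) t :
  grid_mean L (fun th => sum_f_R0 (fun k => W k * (ar (n k) * cos (INR (n k) * th)
                                        - ai (n k) * sin (INR (n k) * th))) K * riesz_prod t th)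
  = sum_f_R0 (fun k => W k * riesz_pairing t k) K.
Proof.
  rewrite (grid_mean_ext L _ (fun th => sum_f_R0 (fun k =>
      (W k * ar (n k)) * (cos (INR (n k) * th) * riesz_prod t th)
      + (- (W k * ai (n k))) * (sin (INR (n k) * th) * riesz_prod t th)) K)).
  - rewrite grid_mean_sum. apply sum_eq. intros k _.
    rewrite grid_mean_plus, !grid_mean_scal. unfold riesz_pairing, riesz_cos, riesz_sin. ring.
  - intro th. rewrite Rmult_comm, scal_sum. apply sum_eq. intros; ring.
Qed.

(* Riesz's argument: pairing a trigonometric polynomial bounded above by Mx with
   the nonnegative, mean-one riesz_prod recovers half the moduli of its coefficients. *)
Lemma riesz_bound (W : nat -> R) Mx :
  (forall th, sum_f_R0 (fun k => W k * (ar (n k) * cos (INR (n k) * th)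
                                     - ai (n k) * sin (INR (n k) * th))) K <= Mx) ->
  sum_below (fun i => W (kk i) * (cmod (ar (n (kk i))) (ai (n (kk i))) / 2)) tmax <= Mx.
Proof.
  intros HM.
  rewrite <- (sum_riesz_pairing W tmax (le_n _)), <- grid_mean_riesz_pairing.
  apply Rle_trans with (grid_mean L (fun th => Mx * riesz_prod tmax th)).
  - apply grid_mean_le; auto. intro th.
    apply Rmult_le_compat_r; [apply riesz_prod_nonneg | apply HM].
  - rewrite grid_mean_scal.
    replace (grid_mean L (riesz_prod tmax)) with (riesz_cos tmax 0); [rewrite riesz_cos_0; [lra|]|].
    + intros i Hi. destruct (freq_lacunary i ltac:(lia)). pose proof (freq_nonneg i). lra.
    + unfold riesz_cos. apply grid_mean_ext. intro; rewrite Rmult_0_l, cos_0; ring.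
Qed.
End Pairing.
End RieszProduct.

(** * Hadamard gap series *)

Section Hadamard.
Variables (lam : R) (n : nat -> nat).
Hypothesis lam_gt1 : lam > 1.
Hypothesis n_pos : (1 <= n 0)%nat.
Hypothesis n_gap : forall k, INR (n (S k)) >= lam * INR (n k).

Lemma n_ge1 k : (1 <= n k)%nat.
Proof.
  induction k; auto.
  pose proof (n_gap k). assert (H1 : 1 <= INR (n k)) by (apply (le_INR 1); auto).
  assert (H2 : INR 0 < INR (n (S k))) by (simpl; nra).
  apply INR_lt in H2. lia.
Qed.

Lemma n_INR_ge1 k : 1 <= INR (n k).
Proof. apply (le_INR 1), n_ge1. Qed.

Lemma n_lt_S k : (n k < n (S k))%nat.
Proof. apply INR_lt. pose proof (n_gap k). pose proof (n_INR_ge1 k). nra. Qed.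

Lemma n_lt k k' : (k < k')%nat -> (n k < n k')%nat.
Proof. intro H. induction H; [apply n_lt_S|]. pose proof (n_lt_S m). lia. Qed.

Lemma n_INR_le k k' : (k <= k')%nat -> INR (n k) <= INR (n k').
Proof.
  intro H. apply le_INR. destruct (Nat.eq_dec k k'); [subst; lia|]. pose proof (n_lt k k'). lia.
Qed.

Lemma lt_n k : (k < n k)%nat.
Proof. induction k; [apply n_ge1|]. pose proof (n_lt_S k). lia. Qed.

Lemma n_gap_pow k m : INR (n (k + m)) >= lam ^ m * INR (n k).
Proof.
  induction m; [rewrite Nat.add_0_r; simpl; lra|].
  rewrite Nat.add_succ_r. pose proof (n_gap (k + m)). simpl.
  assert (0 < lam ^ m) by (apply pow_lt; lra). pose proof (pos_INR (n k)). nra.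
Qed.

(* Along an arithmetic progression of step q the gap ratio becomes lam ^ q; the condition
   below makes it exceed 1 + lam / (lam - 1), which is what the Riesz product needs. *)
Lemma exists_class_step : exists q : nat, (1 <= q)%nat /\ (lam ^ q - 1) * (lam - 1) > lam.
Proof.
  destruct (INR_unbounded (lam / ((lam - 1) * (lam - 1)))) as [q Hq].
  assert (Hl : 0 < (lam - 1) * (lam - 1)) by nra.
  assert (Hq0 : 0 < INR q) by (pose proof (Rdiv_lt_0_compat lam _ ltac:(lra) Hl); lra).
  exists q. split; [change 0 with (INR 0) in Hq0; apply INR_lt in Hq0; lia|].
  pose proof (poly q (lam - 1) ltac:(lra)) as Hb. replace (1 + (lam - 1)) with lam in Hb by ring.
  assert (Hq' : lam < INR q * ((lam - 1) * (lam - 1))).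
  { apply Rmult_lt_reg_r with (/ ((lam - 1) * (lam - 1))); [apply Rinv_0_lt_compat; auto|].
    rewrite Rmult_assoc, Rinv_r by lra. unfold Rdiv in Hq. lra. }
  nra.
Qed.

Section ResidueClass.
Variables (q j : nat).
Hypothesis q_big : (lam ^ q - 1) * (lam - 1) > lam.

Definition class_index i := (j + i * q)%nat.

Lemma class_ratio_gt : lam ^ q - 1 > lam / (lam - 1).
Proof.
  apply Rmult_lt_reg_r with (lam - 1); [lra|]. unfold Rdiv. rewrite Rmult_assoc, Rinv_l by lra. lra.
Qed.

Lemma class_freq_sum_le i : freq_sum n class_index i <= freq n class_index i / (lam ^ q - 1).
Proof.
  pose proof class_ratio_gt.
  assert (Hl : lam / (lam - 1) > 1).
  { apply Rmult_lt_reg_r with (lam - 1); [lra|]. unfold Rdiv. rewrite Rmult_assoc, Rinv_l by lra. lra. }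
  induction i.
  - simpl. apply Rmult_le_pos; [apply pos_INR | left; apply Rinv_0_lt_compat; lra].
  - simpl.
    assert (Hratio : freq n class_index (S i) >= lam ^ q * freq n class_index i).
    { unfold freq, class_index. replace (j + S i * q)%nat with ((j + i * q) + q)%nat by lia.
      apply n_gap_pow. }
    pose proof (freq_nonneg n class_index i).
    apply Rle_trans with (freq n class_index i / (lam ^ q - 1) + freq n class_index i); [lra|].
    replace (freq n class_index i / (lam ^ q - 1) + freq n class_index i)
      with (lam ^ q * freq n class_index i / (lam ^ q - 1)) by (field; lra).
    unfold Rdiv. apply Rmult_le_compat_r; [left; apply Rinv_0_lt_compat; lra | lra].
Qed.

Lemma class_freq_sum_lt i : freq_sum n class_index i < (1 - / lam) * freq n class_index i.
Proof.
  pose proof (class_freq_sum_le i).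
  assert (Hq1 : lam ^ q - 1 > 0) by nra.
  assert (HN : 1 <= freq n class_index i) by apply n_INR_ge1.
  assert (Hr : / (lam ^ q - 1) < 1 - / lam).
  { apply Rmult_lt_reg_r with (lam ^ q - 1); [lra|]. rewrite Rinv_l by lra.
    replace ((1 - / lam) * (lam ^ q - 1)) with ((lam ^ q - 1) * (lam - 1) / lam) by (field; lra).
    apply Rmult_lt_reg_r with lam; [lra|]. unfold Rdiv. rewrite Rmult_assoc, Rinv_l by lra. lra. }
  unfold Rdiv in *. rewrite Rmult_comm in H. nra.
Qed.

Lemma class_freq_separated i k : k <> class_index i ->
  freq_sum n class_index i < Rabs (INR (n k) - freq n class_index i).
Proof.
  intro Hk. pose proof (class_freq_sum_lt i) as HT.
  assert (Hinv : 0 < / lam < 1)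
    by (split; [apply Rinv_0_lt_compat | rewrite <- Rinv_1; apply Rinv_lt_contravar]; lra).
  assert (HN : 0 <= freq n class_index i) by apply pos_INR.
  unfold freq in *.
  destruct (Nat.lt_trichotomy k (class_index i)) as [Hc|[Hc|Hc]]; [|contradiction|].
  - pose proof (n_INR_le (S k) (class_index i) Hc). pose proof (n_gap k).
    assert (INR (n k) <= / lam * INR (n (class_index i))).
    { apply Rmult_le_reg_l with lam; [lra|]. rewrite <- Rmult_assoc, Rinv_r by lra. lra. }
    rewrite Rabs_left1 by nra. nra.
  - pose proof (n_INR_le (S (class_index i)) k Hc). pose proof (n_gap (class_index i)).
    assert ((1 - / lam) <= lam - 1).
    { assert (lam * / lam = 1) by (field; lra). nra. }
    rewrite Rabs_right by nra. nra.
Qed.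
End ResidueClass.

Section GapSeries.
Variables (ar ai : nat -> R) (u : R -> R -> R).
Hypothesis conv_im : forall x y, x * x + y * y < 1 ->
  exists s, infinite_sum (fun k => im_term (ar (n k)) (ai (n k)) x y (n k)) s.
Hypothesis u_def : forall x y, x * x + y * y < 1 ->
  infinite_sum (fun k => re_term (ar (n k)) (ai (n k)) x y (n k)) (u x y).

Definition amp k := cmod (ar (n k)) (ai (n k)).

Lemma amp_pow_bounded rho : 0 < rho < 1 -> exists K, forall k, amp k * rho ^ (n k) <= K.
Proof.
  intro Hr.
  assert (Hin : rho * rho + 0 * 0 < 1) by nra.
  destruct (conv_im _ _ Hin) as [s Hs].
  destruct (series_terms_bounded _ _ Hs) as [K1 HK1].
  destruct (series_terms_bounded _ _ (u_def _ _ Hin)) as [K2 HK2].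
  exists (K1 + K2). intro k. specialize (HK1 k). specialize (HK2 k).
  unfold re_term, im_term in *. rewrite cpow_real in *. cbn [fst snd] in *.
  assert (Hp : 0 <= rho ^ (n k)) by (apply pow_le; lra).
  replace (ar (n k) * 0 + ai (n k) * rho ^ n k) with (ai (n k) * rho ^ n k) in HK1 by ring.
  replace (ar (n k) * rho ^ n k - ai (n k) * 0) with (ar (n k) * rho ^ n k) in HK2 by ring.
  rewrite Rabs_mult, (Rabs_right (rho ^ n k)) in HK1, HK2 by lra.
  apply Rle_trans with ((Rabs (ar (n k)) + Rabs (ai (n k))) * rho ^ (n k)); [|nra].
  apply Rmult_le_compat_r; [exact Hp | apply sqrt_sum_sqr_le_Rabs].
Qed.

Definition grad_majorant r k := INR (n k) * amp k * r ^ pred (n k).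

Lemma grad_majorant_nonneg r k : 0 <= r -> 0 <= grad_majorant r k.
Proof.
  intro Hr. unfold grad_majorant.
  apply Rmult_le_pos; [apply Rmult_le_pos; [apply pos_INR | apply cmod_nonneg] | apply pow_le, Hr].
Qed.

Lemma grad_majorant_le r rho K k : 0 <= r -> 0 < rho -> (forall k, amp k * rho ^ (n k) <= K) ->
  grad_majorant r k <= INR (n k) * (r / rho) ^ pred (n k) * (K / rho).
Proof.
  intros Hr Hrho HK.
  assert (Hamp : amp k * rho ^ pred (n k) <= K / rho).
  { pose proof (HK k) as HKk. pose proof (n_ge1 k).
    replace (n k) with (S (pred (n k))) in HKk by lia. simpl in HKk.
    apply Rmult_le_reg_r with rho; [lra|]. unfold Rdiv. rewrite (Rmult_assoc K), Rinv_l by lra. lra. }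
  unfold grad_majorant.
  replace r with (r / rho * rho) at 1 by (field; lra). rewrite Rpow_mult_distr.
  replace (INR (n k) * amp k * ((r / rho) ^ pred (n k) * rho ^ pred (n k)))
    with ((INR (n k) * (r / rho) ^ pred (n k)) * (amp k * rho ^ pred (n k))) by ring.
  apply Rmult_le_compat_l; [|exact Hamp].
  apply Rmult_le_pos; [apply pos_INR|].
  apply pow_le, Rmult_le_pos; [lra | left; apply Rinv_0_lt_compat; lra].
Qed.

Lemma grad_majorant_cv r : 0 <= r < 1 -> exists l, Un_cv (fun N => sum_f_R0 (grad_majorant r) N) l.
Proof.
  intro Hr.
  set (rho := (1 + r) / 2).
  assert (Hrho : 0 < rho < 1) by (unfold rho; lra).
  destruct (amp_pow_bounded rho Hrho) as [K HK].
  assert (HK0 : 0 <= K).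
  { specialize (HK 0%nat). pose proof (cmod_nonneg (ar (n 0)) (ai (n 0))).
    pose proof (pow_le rho (n 0) ltac:(lra)). unfold amp in HK. nra. }
  destruct (pow_pred_mul_le_geometric (r / rho)) as [C [t [HC [Ht Hgeo]]]].
  { split; [apply Rmult_le_pos; [lra | left; apply Rinv_0_lt_compat; lra]|].
    apply Rmult_lt_reg_r with rho; [lra|]. unfold Rdiv. rewrite Rmult_assoc, Rinv_l by lra.
    unfold rho. lra. }
  set (c := C * (K / rho)).
  assert (Hgeom : Un_cv (fun N => sum_f_R0 (fun k => c * t ^ k) N) (c * / (1 - t))).
  { apply (Un_cv_ext (fun N => c * sum_f_R0 (fun k => 1 * t ^ k) N)).
    - intro N. rewrite scal_sum. apply sum_eq. intros; ring.
    - apply CV_mult; [apply Un_cv_const |]. apply GP_infinite. rewrite Rabs_right; lra. }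
  enough (Hdom : forall k, Rabs (grad_majorant r k) <= c * t ^ k)
    by (destruct (series_cv_dominated _ _ _ Hdom Hgeom) as [l Hl]; now exists l).
  intro k. rewrite Rabs_right by (apply Rle_ge, grad_majorant_nonneg; lra).
  eapply Rle_trans; [apply (grad_majorant_le r rho K k); [lra | lra | exact HK]|].
  assert (Hshift : t ^ pred (n k) <= t ^ k) by (apply Rle_pow_le_one; [lra | pose proof (lt_n k); lia]).
  assert (0 <= K / rho) by (apply Rmult_le_pos; [lra | left; apply Rinv_0_lt_compat; lra]).
  unfold c. replace (C * (K / rho) * t ^ k) with (C * t ^ k * (K / rho)) by ring.
  apply Rmult_le_compat_r; [lra|].
  eapply Rle_trans; [apply Hgeo | apply Rmult_le_compat_l; [lra | exact Hshift]].
Qed.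

Definition du_dx_term x y k := INR (n k) * re_term (ar (n k)) (ai (n k)) x y (pred (n k)).
Definition du_dy_term x y k := - (INR (n k) * im_term (ar (n k)) (ai (n k)) x y (pred (n k))).
Definition du_dx x y := series_sum (du_dx_term x y).
Definition du_dy x y := series_sum (du_dy_term x y).

Lemma grad_terms_bound x y r k : sqrt (x * x + y * y) <= r ->
  Rabs (du_dx_term x y k) <= grad_majorant r k /\ Rabs (du_dy_term x y k) <= grad_majorant r k.
Proof.
  intro Hr. destruct (term_bound (ar (n k)) (ai (n k)) x y (pred (n k)) r Hr) as [H1 H2].
  unfold du_dx_term, du_dy_term, grad_majorant, amp.
  rewrite Rabs_Ropp, !Rabs_mult, (Rabs_right (INR (n k))) by (apply Rle_ge, pos_INR).
  pose proof (pos_INR (n k)). rewrite !Rmult_assoc. split; apply Rmult_le_compat_l; auto.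
Qed.

Lemma grad_series_cv x y : x * x + y * y < 1 ->
  Un_cv (fun N => sum_f_R0 (du_dx_term x y) N) (du_dx x y) /\
  Un_cv (fun N => sum_f_R0 (du_dy_term x y) N) (du_dy x y).
Proof.
  intro Hxy. destruct (grad_majorant_cv _ (sqrt_sum_sqr_lt_1 x y Hxy)) as [l Hl].
  split; apply series_sum_cv; eapply series_cv_dominated; try exact Hl;
    intro k; apply (grad_terms_bound x y); lra.
Qed.

Lemma u_partial_derivatives x y : x * x + y * y < 1 ->
  derivable_pt_lim (fun t => u t y) x (du_dx x y) /\
  derivable_pt_lim (fun t => u x t) y (du_dy x y).
Proof.
  intro Hxy. set (S := sqrt (x * x + y * y)).
  assert (HS : 0 <= S < 1) by apply (sqrt_sum_sqr_lt_1 x y Hxy).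
  set (r := (S + 1) / 2). assert (Hr : 0 <= r < 1) by (unfold r; lra).
  destruct (grad_majorant_cv r Hr) as [l Hl].
  assert (Hd : 0 < r - S) by (unfold r; lra).
  split.
  - apply (derivable_pt_lim_series (fun k t => re_term (ar (n k)) (ai (n k)) t y (n k))
             (fun k t => du_dx_term t y k) (grad_majorant r) (fun t => u t y) x (r - S) l Hd).
    + intros k t _. apply derivable_pt_lim_re_term_x.
    + intros k t _. apply derivable_continuous_pt. unfold du_dx_term.
      eexists. apply derivable_pt_lim_scal, derivable_pt_lim_re_term_x.
    + intros k t Ht. apply (grad_terms_bound t y r k).
      replace t with (x + (t - x)) by ring. eapply Rle_trans; [apply norm_add_x_le|]. fold S. lra.
    + exact Hl.
    + intros t Ht. apply u_def, sum_sqr_lt_1_of_sqrt; [apply sum_sqr_nonneg|].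
      replace t with (x + (t - x)) by ring. eapply Rle_lt_trans; [apply norm_add_x_le|]. fold S. lra.
  - apply (derivable_pt_lim_series (fun k t => re_term (ar (n k)) (ai (n k)) x t (n k))
             (fun k t => du_dy_term x t k) (grad_majorant r) (fun t => u x t) y (r - S) l Hd).
    + intros k t _. apply derivable_pt_lim_re_term_y.
    + intros k t _. apply derivable_continuous_pt. unfold du_dy_term.
      eexists. apply derivable_pt_lim_opp, derivable_pt_lim_scal, derivable_pt_lim_im_term_y.
    + intros k t Ht. apply (grad_terms_bound x t r k).
      replace t with (y + (t - y)) by ring. eapply Rle_trans; [apply norm_add_y_le|]. fold S. lra.
    + exact Hl.
    + intros t Ht. apply u_def, sum_sqr_lt_1_of_sqrt; [apply sum_sqr_nonneg|].
      replace t with (y + (t - y)) by ring. eapply Rle_lt_trans; [apply norm_add_y_le|]. fold S. lra.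
Qed.

Lemma in_Bloch_mu_iff (mu : R -> R) : in_Bloch_mu mu u <->
  exists M, forall x y, x * x + y * y < 1 ->
    Rabs (u 0 0) + mu (sqrt (x * x + y * y))
                   * sqrt (du_dx x y * du_dx x y + du_dy x y * du_dy x y) <= M.
Proof.
  split; intros [M HM]; exists M; intros x y Hxy;
    destruct (u_partial_derivatives x y Hxy) as [D1 D2].
  - destruct (HM x y Hxy) as [ux [uy [H1 [H2 H3]]]].
    rewrite (uniqueness_limite _ _ _ _ D1 H1), (uniqueness_limite _ _ _ _ D2 H2). exact H3.
  - exists (du_dx x y), (du_dy x y). auto.
Qed.

Lemma grad_term_modulus x y k :
  sqrt (du_dx_term x y k ^ 2 + du_dy_term x y k ^ 2) = grad_majorant (sqrt (x * x + y * y)) k.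
Proof.
  unfold du_dx_term, du_dy_term, grad_majorant, amp.
  set (re := re_term (ar (n k)) (ai (n k)) x y (pred (n k))).
  set (im := im_term (ar (n k)) (ai (n k)) x y (pred (n k))).
  replace ((INR (n k) * re) ^ 2 + (- (INR (n k) * im)) ^ 2)
    with (INR (n k) ^ 2 * (re ^ 2 + im ^ 2)) by ring.
  pose proof (pow2_ge_0 re). pose proof (pow2_ge_0 im).
  rewrite sqrt_mult, sqrt_pow2; [|apply pos_INR | apply pow2_ge_0 | lra].
  unfold re, im. rewrite term_modulus. ring.
Qed.

Lemma grad_directional_le x y e1 e2 lD : x * x + y * y < 1 -> e1 * e1 + e2 * e2 <= 1 ->
  Un_cv (fun N => sum_f_R0 (grad_majorant (sqrt (x * x + y * y))) N) lD ->
  e1 * du_dx x y + e2 * du_dy x y <= lD.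
Proof.
  intros Hxy He HD. destruct (grad_series_cv x y Hxy) as [C1 C2].
  apply (@Rle_cv_lim (fun N => e1 * sum_f_R0 (du_dx_term x y) N + e2 * sum_f_R0 (du_dy_term x y) N)
           (fun N => sum_f_R0 (grad_majorant (sqrt (x * x + y * y))) N)).
  - intro N. rewrite !scal_sum, <- plus_sum. apply sum_Rle. intros k _.
    rewrite <- grad_term_modulus, (Rmult_comm (du_dx_term x y k)), (Rmult_comm (du_dy_term x y k)).
    apply Cauchy_Schwarz_R2; auto.
  - apply CV_plus; apply CV_mult; auto using Un_cv_const.
  - exact HD.
Qed.

Lemma grad_norm_le x y lD : x * x + y * y < 1 ->
  Un_cv (fun N => sum_f_R0 (grad_majorant (sqrt (x * x + y * y))) N) lD ->
  sqrt (du_dx x y * du_dx x y + du_dy x y * du_dy x y) <= lD.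
Proof.
  intros Hxy HD.
  set (g := sqrt (du_dx x y * du_dx x y + du_dy x y * du_dy x y)).
  assert (Hg2 : g * g = du_dx x y * du_dx x y + du_dy x y * du_dy x y)
    by (apply sqrt_sqrt, sum_sqr_nonneg).
  destruct (Req_dec g 0) as [Hg0|Hg0].
  - rewrite Hg0. replace 0 with (0 * du_dx x y + 0 * du_dy x y) by ring.
    apply grad_directional_le; auto; lra.
  - assert (E : g = (du_dx x y * du_dx x y + du_dy x y * du_dy x y) / g)
      by (rewrite <- Hg2; field; exact Hg0).
    rewrite E at 1.
    replace ((du_dx x y * du_dx x y + du_dy x y * du_dy x y) / g)
      with (du_dx x y / g * du_dx x y + du_dy x y / g * du_dy x y) by (field; exact Hg0).
    apply grad_directional_le; auto. right.
    replace (du_dx x y / g * (du_dx x y / g) + du_dy x y / g * (du_dy x y / g))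
      with ((du_dx x y * du_dx x y + du_dy x y * du_dy x y) / (g * g)) by (field; exact Hg0).
    rewrite <- Hg2. field. exact Hg0.
Qed.

Section Sufficiency.
Variables (mu : R -> R) (B : R).
Hypothesis mu_pos : forall r, 0 <= r < 1 -> 0 < mu r.
Hypothesis mu_decr : forall r s, 0 <= r -> r <= s -> s < 1 -> mu s <= mu r.
Hypothesis B_pos : B > 0.
Hypothesis mu_doub : forall d, 0 < d <= 1 -> mu (1 - d / 2) >= B * mu (1 - d).

Definition low_sum N := sum_f_R0 (fun k => if Nat.leb (n k) N then INR (n k) * amp k else 0) N.

Definition trunc_majorant K s X :=
  sum_f_R0 (fun k => if Nat.leb (n k) X then grad_majorant s k else 0) K.

Lemma low_sum_ge K N :
  sum_f_R0 (fun k => if Nat.leb (n k) N then INR (n k) * amp k else 0) K <= low_sum N.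
Proof.
  assert (Hnn : forall k, 0 <= (if Nat.leb (n k) N then INR (n k) * amp k else 0)).
  { intro k. destruct (Nat.leb (n k) N); [|lra].
    apply Rmult_le_pos; [apply pos_INR | apply cmod_nonneg]. }
  unfold low_sum. destruct (Nat.le_gt_cases K N) as [H|H].
  - apply sum_f_R0_le_mono; auto.
  - rewrite (sum_f_R0_stable _ N K); [lra | | lia].
    intros i Hi. pose proof (lt_n i). destruct (Nat.leb_spec (n i) N); [lia | reflexivity].
Qed.

Lemma mu_doubling_pow m d : 0 < d <= 1 -> mu (1 - d / 2 ^ m) >= B ^ m * mu (1 - d).
Proof.
  intro Hd. induction m.
  - simpl. replace (d / 1) with d by field. lra.
  - assert (H2 : 0 < 2 ^ m) by (apply pow_lt; lra).
    assert (H1 : 1 <= 2 ^ m) by (apply pow_R1_Rle; lra).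
    replace (d / 2 ^ S m) with ((d / 2 ^ m) / 2) by (simpl; field; lra).
    assert (Hd' : 0 < d / 2 ^ m <= 1).
    { split; [apply Rdiv_lt_0_compat; lra|]. apply Rmult_le_reg_r with (2 ^ m); [lra|].
      unfold Rdiv. rewrite Rmult_assoc, Rinv_l by lra. lra. }
    pose proof (mu_doub _ Hd'). simpl.
    assert (0 < B ^ m) by (apply pow_lt; lra). nra.
Qed.

Lemma trunc_majorant_full K s X : (n K <= X)%nat ->
  trunc_majorant K s X = sum_f_R0 (grad_majorant s) K.
Proof.
  intro H. unfold trunc_majorant. apply sum_eq. intros i Hi.
  destruct (Nat.leb_spec (n i) X); [reflexivity|].
  destruct (Nat.eq_dec i K); [subst; lia|]. pose proof (n_lt i K ltac:(lia)). lia.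
Qed.

Lemma trunc_majorant_le_low_sum K s X : 0 <= s <= 1 -> trunc_majorant K s X <= low_sum X.
Proof.
  intro Hs. eapply Rle_trans; [|apply (low_sum_ge K X)]. apply sum_Rle. intros k _.
  destruct (Nat.leb (n k) X); [|lra]. unfold grad_majorant.
  pose proof (pow_le_one s (pred (n k)) Hs). pose proof (pow_le s (pred (n k)) (proj1 Hs)).
  assert (0 <= INR (n k) * amp k) by (apply Rmult_le_pos; [apply pos_INR | apply cmod_nonneg]).
  nra.
Qed.

Lemma trunc_majorant_step K s X0 X1 : 0 <= s <= 1 -> (X0 <= X1)%nat ->
  trunc_majorant K s X1 - trunc_majorant K s X0 <= s ^ X0 * low_sum X1.
Proof.
  intros Hs HX. pose proof (pow_le s X0 (proj1 Hs)).
  eapply Rle_trans; [|apply Rmult_le_compat_l; [lra | apply (low_sum_ge K X1)]].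
  unfold trunc_majorant. rewrite <- minus_sum, scal_sum. apply sum_Rle. intros k _.
  assert (0 <= INR (n k) * amp k) by (apply Rmult_le_pos; [apply pos_INR | apply cmod_nonneg]).
  unfold grad_majorant.
  destruct (Nat.leb_spec (n k) X1); destruct (Nat.leb_spec (n k) X0); try lia.
  - pose proof (pow_le s (pred (n k)) (proj1 Hs)). nra.
  - assert (s ^ pred (n k) <= s ^ X0) by (apply Rle_pow_le_one; auto; lia). nra.
  - nra.
Qed.

Section DyadicBlocks.
Variables (C : R) (p N0 : nat) (s : R).
Hypothesis low_sum_bound : forall N, (1 <= N)%nat -> low_sum N <= C / mu (1 - 1 / INR N).
Hypothesis C_nonneg : 0 <= C.
Hypothesis p_pos : (1 <= p)%nat.
Hypothesis p_block : (2 / 3) ^ (2 ^ p) <= B ^ p / 2.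
Hypothesis s_range : 0 <= s < 1.
Hypothesis N0_pos : (1 <= N0)%nat.
Hypothesis N0_floor : INR N0 <= 1 / (1 - s) < INR N0 + 1.

Definition block_end j := (2 ^ (p * j) * N0)%nat.

Lemma block_end_INR j : INR (block_end j) = 2 ^ (p * j) * INR N0.
Proof. unfold block_end. rewrite mult_INR, pow_INR. reflexivity. Qed.

Lemma inv_N0_range : 0 < 1 / INR N0 <= 1 /\ 1 - 1 / INR N0 <= s.
Proof.
  assert (HN : 1 <= INR N0) by (apply (le_INR 1); auto).
  assert (H1 : (1 - s) * INR N0 <= 1).
  { apply Rle_trans with ((1 - s) * (1 / (1 - s))); [apply Rmult_le_compat_l; lra|].
    right; field; lra. }
  repeat split.
  - apply Rdiv_lt_0_compat; lra.
  - apply Rmult_le_reg_r with (INR N0); [lra|]. unfold Rdiv. rewrite Rmult_assoc, Rinv_l; lra.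
  - assert (1 - s <= 1 / INR N0); [|lra].
    apply Rmult_le_reg_r with (INR N0); [lra|]. unfold Rdiv. rewrite Rmult_assoc, Rinv_l; lra.
Qed.

Lemma pow_block_end_le j : s ^ block_end j <= (B ^ p / 2) ^ j.
Proof.
  pose proof (pow_le_two_thirds s N0 s_range (proj2 N0_floor)) as HsN0.
  unfold block_end. rewrite Nat.mul_comm, pow_mult.
  apply Rle_trans with ((2 / 3) ^ (2 ^ (p * j))).
  { apply pow_incr. split; auto. apply pow_le; lra. }
  apply Rle_trans with ((2 / 3) ^ (2 ^ p * j)).
  { apply Rle_pow_le_one; [lra|]. rewrite Nat.pow_mul_r. apply nat_mul_le_pow.
    pose proof (Nat.pow_le_mono_r 2 1 p ltac:(lia) p_pos). simpl in *. lia. }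
  rewrite pow_mult. apply pow_incr. split; auto. apply pow_le; lra.
Qed.

Lemma low_sum_block_end_le j : low_sum (block_end (S j)) <= C / (B ^ (p * S j) * mu s).
Proof.
  destruct inv_N0_range as [Hd Hs].
  assert (HN0 : 1 <= INR N0) by (apply (le_INR 1); auto).
  assert (HX : (1 <= block_end (S j))%nat)
    by (unfold block_end; pose proof (Nat.pow_nonzero 2 (p * S j) ltac:(lia)); nia).
  assert (HXR : 1 <= INR (block_end (S j))) by (apply (le_INR 1); auto).
  pose proof (mu_doubling_pow (p * S j) _ Hd) as Hdb.
  replace (1 / INR N0 / 2 ^ (p * S j)) with (1 / INR (block_end (S j))) in Hdb
    by (rewrite block_end_INR; field; split; [lra | apply pow_nonzero; lra]).
  assert (HBj : 0 < B ^ (p * S j)) by (apply pow_lt; lra).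
  assert (Hmus : mu s <= mu (1 - 1 / INR N0)) by (apply mu_decr; lra).
  assert (Hmus0 : 0 < mu s) by (apply mu_pos; lra).
  eapply Rle_trans; [apply low_sum_bound; auto|].
  unfold Rdiv. apply Rmult_le_compat_l; auto. apply Rinv_le_contravar; [nra|].
  apply Rle_trans with (B ^ (p * S j) * mu (1 - 1 / INR N0)); [nra | lra].
Qed.

Lemma trunc_majorant_block K j :
  trunc_majorant K s (block_end (S j)) - trunc_majorant K s (block_end j)
  <= C / (B ^ p * mu s) * (/ 2) ^ j.
Proof.
  assert (Hmus : 0 < mu s) by (apply mu_pos; lra).
  eapply Rle_trans; [apply trunc_majorant_step; [lra|]|].
  { unfold block_end. apply Nat.mul_le_mono_r, Nat.pow_le_mono_r; lia. }
  apply Rle_trans with ((B ^ p / 2) ^ j * (C / (B ^ (p * S j) * mu s))).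
  - apply Rmult_le_compat; auto using pow_block_end_le, low_sum_block_end_le.
    + apply pow_le; lra.
    + pose proof (low_sum_ge O (block_end (S j))). simpl in H.
      destruct (Nat.leb _ _); [|lra]. eapply Rle_trans; [|exact H].
      apply Rmult_le_pos; [apply pos_INR | apply cmod_nonneg].
  - right. replace (p * S j)%nat with (p + p * j)%nat by lia.
    rewrite pow_add, pow_mult. unfold Rdiv. rewrite Rpow_mult_distr.
    assert (0 < B ^ p) by (apply pow_lt; lra).
    assert (0 < (B ^ p) ^ j) by (apply pow_lt; lra).
    field. repeat split; lra.
Qed.

Lemma grad_majorant_partial_le K :
  sum_f_R0 (grad_majorant s) K <= (C + 2 * C / B ^ p) / mu s.
Proof.
  destruct inv_N0_range as [Hd Hs].
  assert (Hmus : 0 < mu s) by (apply mu_pos; lra).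
  assert (HBp : 0 < B ^ p) by (apply pow_lt; lra).
  rewrite <- (trunc_majorant_full K s (block_end (S (n K)))).
  2: { unfold block_end. pose proof (Nat.pow_gt_lin_r 2 (p * S (n K)) ltac:(lia)). nia. }
  eapply Rle_trans.
  { apply (telescope_le (fun j => trunc_majorant K s (block_end j))
           (fun j => C / (B ^ p * mu s) * (/ 2) ^ j) (C / mu s)).
    - eapply Rle_trans; [apply trunc_majorant_le_low_sum; lra|].
      replace (block_end O) with N0 by (unfold block_end; rewrite Nat.mul_0_r; simpl; lia).
      eapply Rle_trans; [apply low_sum_bound; auto|]. unfold Rdiv.
      apply Rmult_le_compat_l; auto. apply Rinv_le_contravar; auto. apply mu_decr; lra.
    - exact (trunc_majorant_block K). }
  rewrite (sum_eq _ (fun j => (/ 2) ^ j * (C / (B ^ p * mu s)))) by (intros; ring).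
  rewrite <- scal_sum.
  assert (0 <= C / (B ^ p * mu s)) by (apply Rmult_le_pos; auto; left; apply Rinv_0_lt_compat; nra).
  pose proof (sum_pow_half_le (n K)).
  apply Rle_trans with (C / mu s + C / (B ^ p * mu s) * 2);
    [apply Rplus_le_compat_l, Rmult_le_compat_l; assumption|].
  right. field. split; lra.
Qed.
End DyadicBlocks.

Lemma grad_majorant_sum_bound C : (forall N, (1 <= N)%nat -> low_sum N <= C / mu (1 - 1 / INR N)) ->
  exists C', forall s K, 0 <= s < 1 -> sum_f_R0 (grad_majorant s) K <= C' / mu s.
Proof.
  intro HS.
  assert (HC : 0 <= C).
  { specialize (HS 1%nat (le_n 1)). pose proof (low_sum_ge O 1). simpl in H.
    assert (Hm : 0 < mu (1 - 1 / INR 1)) by (apply mu_pos; simpl; split; lra).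
    assert (0 <= low_sum 1).
    { eapply Rle_trans; [|exact H]. pose proof (n_ge1 0). destruct (Nat.leb_spec (n 0) 1); [|lra].
      apply Rmult_le_pos; [apply pos_INR | apply cmod_nonneg]. }
    destruct (Rle_dec 0 C) as [|HC]; auto. exfalso.
    assert (C / mu (1 - 1 / INR 1) < 0) by (apply Rdiv_neg_pos; lra). lra. }
  destruct (exists_block_exponent B B_pos) as [p [Hp Hpb]].
  exists (C + 2 * C / B ^ p). intros s K Hs.
  destruct (exists_nat_floor (1 / (1 - s))) as [N0 [HN0 HN0f]].
  { apply Rmult_le_reg_r with (1 - s); [lra|]. unfold Rdiv. rewrite Rmult_assoc, Rinv_l; lra. }
  apply (grad_majorant_partial_le C p N0 s); auto.
Qed.

Lemma in_Bloch_of_low_sum_bound :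
  (exists C, forall N, (1 <= N)%nat -> low_sum N <= C / mu (1 - 1 / INR N)) -> in_Bloch_mu mu u.
Proof.
  intros [C HC]. destruct (grad_majorant_sum_bound C HC) as [C' HC'].
  apply in_Bloch_mu_iff. exists (Rabs (u 0 0) + C'). intros x y Hxy.
  pose proof (sqrt_sum_sqr_lt_1 x y Hxy) as Hs.
  set (s := sqrt (x * x + y * y)) in *.
  assert (Hmu : 0 < mu s) by (apply mu_pos; auto).
  destruct (grad_majorant_cv s Hs) as [lD HlD].
  assert (HlD' : lD <= C' / mu s).
  { apply (@Rle_cv_lim _ (fun _ => C' / mu s) _ _ (fun K => HC' s K Hs) HlD).
    apply Un_cv_const. }
  pose proof (grad_norm_le x y lD Hxy HlD).
  assert (mu s * sqrt (du_dx x y * du_dx x y + du_dy x y * du_dy x y) <= C').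
  { apply Rle_trans with (mu s * (C' / mu s)); [apply Rmult_le_compat_l; lra|].
    right. field. lra. }
  lra.
Qed.
End Sufficiency.

Definition radial_weight r k := INR (n k) * amp k * r ^ (n k).

Lemma radial_weight_nonneg r k : 0 <= r -> 0 <= radial_weight r k.
Proof.
  intro Hr. unfold radial_weight.
  apply Rmult_le_pos; [apply Rmult_le_pos; [apply pos_INR | apply cmod_nonneg] | apply pow_le, Hr].
Qed.

Lemma radial_weight_cv r : 0 <= r < 1 -> exists l, Un_cv (fun N => sum_f_R0 (radial_weight r) N) l.
Proof.
  intro Hr. destruct (grad_majorant_cv r Hr) as [lD HlD]. exists (r * lD).
  apply (Un_cv_ext (fun N => r * sum_f_R0 (grad_majorant r) N));
    [|apply CV_mult; auto using Un_cv_const].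
  intro N. rewrite scal_sum. apply sum_eq. intros k _.
  unfold radial_weight, grad_majorant. pose proof (n_ge1 k).
  destruct (n k) as [|m]; [lia|]. simpl pred. simpl pow. ring.
Qed.

Lemma radial_derivative_cv x y : x * x + y * y < 1 ->
  Un_cv (fun N => sum_f_R0 (fun k => INR (n k) * re_term (ar (n k)) (ai (n k)) x y (n k)) N)
        (x * du_dx x y + y * du_dy x y).
Proof.
  intro Hxy. destruct (grad_series_cv x y Hxy) as [C1 C2].
  apply (Un_cv_ext (fun N => x * sum_f_R0 (du_dx_term x y) N + y * sum_f_R0 (du_dy_term x y) N)).
  - intro N. rewrite !scal_sum, <- plus_sum. apply sum_eq. intros k _.
    unfold du_dx_term, du_dy_term, re_term, im_term. pose proof (n_ge1 k).
    destruct (n k) as [|m]; [lia|]. simpl pred. rewrite cpow_S. cbn [fst snd]. ring.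
  - apply CV_plus; apply CV_mult; auto using Un_cv_const.
Qed.

Section Necessity.
Variables (r M : R).
Hypothesis r_range : 0 < r < 1.
Hypothesis grad_bounded_on_circle : forall th,
  sqrt (du_dx (r * cos th) (r * sin th) * du_dx (r * cos th) (r * sin th)
        + du_dy (r * cos th) (r * sin th) * du_dy (r * cos th) (r * sin th)) <= M.

Lemma polar_in_disk th : (r * cos th) * (r * cos th) + (r * sin th) * (r * sin th) < 1.
Proof. rewrite polar_sum_sqr. nra. Qed.

Lemma radial_derivative_le th :
  r * cos th * du_dx (r * cos th) (r * sin th) + r * sin th * du_dy (r * cos th) (r * sin th) <= M.
Proof.
  set (gx := du_dx (r * cos th) (r * sin th)). set (gy := du_dy (r * cos th) (r * sin th)).
  pose proof (grad_bounded_on_circle th) as HM. fold gx gy in HM.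
  pose proof (Cauchy_Schwarz_R2 (cos th) (sin th) gx gy
    ltac:(pose proof (sin2_cos2 th); unfold Rsqr in *; lra)) as Hcs.
  replace (gx ^ 2 + gy ^ 2) with (gx * gx + gy * gy) in Hcs by ring.
  assert (0 <= M) by (eapply Rle_trans; [apply sqrt_pos | exact HM]).
  replace (r * cos th * gx + r * sin th * gy) with (r * (cos th * gx + sin th * gy)) by ring.
  apply Rle_trans with (r * M); [apply Rmult_le_compat_l; lra | nra].
Qed.

Lemma radial_partial_sum_le lW th K :
  Un_cv (fun N => sum_f_R0 (radial_weight r) N) lW ->
  sum_f_R0 (fun k => INR (n k) * r ^ n k * (ar (n k) * cos (INR (n k) * th)
                                          - ai (n k) * sin (INR (n k) * th))) K
  <= M + (lW - sum_f_R0 (radial_weight r) K).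
Proof.
  intro HW. pose proof (radial_derivative_le th) as Hrad.
  set (x := r * cos th) in *. set (y := r * sin th) in *.
  assert (Hxy : x * x + y * y < 1) by apply polar_in_disk.
  assert (Hbd : forall k,
            Rabs (INR (n k) * re_term (ar (n k)) (ai (n k)) x y (n k)) <= radial_weight r k).
  { intro k. destruct (term_bound (ar (n k)) (ai (n k)) x y (n k) r) as [T1 _].
    { unfold x, y. rewrite polar_sum_sqr, sqrt_square; lra. }
    rewrite Rabs_mult, Rabs_right by (apply Rle_ge, pos_INR). unfold radial_weight, amp.
    rewrite Rmult_assoc. apply Rmult_le_compat_l; [apply pos_INR | exact T1]. }
  pose proof (sum_maj1 (fun k _ => INR (n k) * re_term (ar (n k)) (ai (n k)) x y (n k))
                (radial_weight r) 0 _ _ K (radial_derivative_cv x y Hxy) HW Hbd) as Htail.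
  apply Rabs_le_inv in Htail. unfold SP in Htail.
  rewrite (sum_eq _ (fun k => INR (n k) * re_term (ar (n k)) (ai (n k)) x y (n k))); [lra|].
  intros k _. unfold x, y. rewrite re_term_polar. ring.
Qed.

(* Riesz's argument on one residue class, with the spectrum truncated at an index K whose
   tail in the majorant is below eps / 2, and with a grid of L = 3 n_K + 1 points. *)
Lemma class_sum_le q j t : (lam ^ q - 1) * (lam - 1) > lam ->
  sum_below (fun i => radial_weight r (class_index q j i)) t <= 2 * M.
Proof.
  intros Hqb.
  destruct (radial_weight_cv r ltac:(lra)) as [lW HW].
  apply Rle_plus_epsilon. intros eps Heps.
  destruct (HW (eps / 2) ltac:(lra)) as [K0 HK0].
  set (K := (K0 + j + t * q)%nat).
  assert (Htail : lW - sum_f_R0 (radial_weight r) K < eps / 2).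
  { specialize (HK0 K ltac:(unfold K; lia)). unfold Rdist in HK0. apply Rabs_def2 in HK0. lra. }
  set (L := (3 * n K + 1)%nat).
  assert (HLR : INR L = 3 * INR (n K) + 1)
    by (unfold L; rewrite plus_INR, mult_INR; simpl; ring).
  assert (HnK : forall k, (k <= K)%nat -> INR (n k) <= INR (n K)) by (intros; apply n_INR_le; auto).
  assert (Hkk : forall i, (i <= t)%nat -> (class_index q j i <= K)%nat)
    by (intros; unfold class_index, K; nia).
  assert (Hfreq : forall i, (i <= t)%nat -> freq n (class_index q j) i <= INR (n K))
    by (intros i Hi; apply HnK, Hkk, Hi).
  assert (Hsum : forall i, freq_sum n (class_index q j) i < freq n (class_index q j) i).
  { intro i. pose proof (class_freq_sum_lt q j Hqb i). pose proof (freq_nonneg n (class_index q j) i).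
    assert (0 < / lam) by (apply Rinv_0_lt_compat; lra). nra. }
  set (W := fun k => INR (n k) * r ^ (n k)).
  assert (Hriesz : sum_below (fun i => W (class_index q j i)
                     * (cmod (ar (n (class_index q j i))) (ai (n (class_index q j i))) / 2)) t
                   <= M + eps / 2).
  { apply (riesz_bound n ar ai (class_index q j) L ltac:(unfold L; lia) K t).
    - intros i Hi. pose proof (Hsum i). pose proof (Hfreq i Hi). rewrite HLR. lra.
    - intros i k Hk. apply (class_freq_separated q j Hqb i k Hk).
    - intros i Hi. apply Hkk; lia.
    - intros k i Hk Hi. pose proof (Hsum i). pose proof (Hfreq i ltac:(lia)). pose proof (HnK k Hk).
      rewrite HLR. lra.
    - intros k Hk. pose proof (n_INR_ge1 k). pose proof (HnK k Hk). rewrite HLR. lra.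
    - intro th. eapply Rle_trans; [apply (radial_partial_sum_le lW th K HW)|]. lra. }
  rewrite (sum_below_ext _ (fun i => 2 * (W (class_index q j i)
             * (cmod (ar (n (class_index q j i))) (ai (n (class_index q j i))) / 2)))).
  - rewrite sum_below_scal. lra.
  - intros i _. unfold radial_weight, W, amp. field.
Qed.

Lemma radial_sum_le q N : (1 <= q)%nat -> (lam ^ q - 1) * (lam - 1) > lam ->
  sum_below (radial_weight r) N <= 2 * INR q * M.
Proof.
  intros Hq Hqb.
  apply Rle_trans with (sum_below (radial_weight r) (q * N)).
  { apply sum_below_le_mono; [intro; apply radial_weight_nonneg; lra | nia]. }
  rewrite sum_below_classes.
  apply Rle_trans with (sum_below (fun _ => 2 * M) q).
  - apply sum_below_le. intros j _. apply class_sum_le, Hqb.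
  - rewrite sum_below_const. lra.
Qed.
End Necessity.

Lemma grad_le_on_circle (mu : R -> R) M r th : 0 < r < 1 -> 0 < mu r ->
  (forall x y, x * x + y * y < 1 -> Rabs (u 0 0) + mu (sqrt (x * x + y * y))
     * sqrt (du_dx x y * du_dx x y + du_dy x y * du_dy x y) <= M) ->
  sqrt (du_dx (r * cos th) (r * sin th) * du_dx (r * cos th) (r * sin th)
        + du_dy (r * cos th) (r * sin th) * du_dy (r * cos th) (r * sin th)) <= M / mu r.
Proof.
  intros Hr Hmur HM. specialize (HM _ _ (polar_in_disk r Hr th)).
  rewrite polar_sum_sqr, sqrt_square in HM by lra.
  pose proof (Rabs_pos (u 0 0)).
  apply Rmult_le_reg_l with (mu r); auto. unfold Rdiv.
  rewrite (Rmult_comm M), <- Rmult_assoc, Rinv_r, Rmult_1_l by lra. lra.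
Qed.

Lemma low_sum_le_radial N r : 0 <= r <= 1 -> / 2 <= r ^ N ->
  low_sum N <= 2 * sum_below (radial_weight r) (S N).
Proof.
  intros Hr HrN. rewrite sum_below_S, scal_sum. apply sum_Rle. intros k Hk.
  destruct (Nat.leb_spec (n k) N).
  - unfold radial_weight.
    assert (r ^ N <= r ^ (n k)) by (apply Rle_pow_le_one; auto).
    assert (0 <= INR (n k) * amp k) by (apply Rmult_le_pos; [apply pos_INR | apply cmod_nonneg]).
    nra.
  - pose proof (radial_weight_nonneg r k ltac:(lra)). lra.
Qed.

Lemma low_sum_bound_of_in_Bloch (mu : R -> R) (B : R)
  (mu_pos : forall r, 0 <= r < 1 -> 0 < mu r)
  (B_pos : B > 0)
  (mu_doub : forall d, 0 < d <= 1 -> mu (1 - d / 2) >= B * mu (1 - d)) :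
  in_Bloch_mu mu u -> exists C, forall N, (1 <= N)%nat -> low_sum N <= C / mu (1 - 1 / INR N).
Proof.
  intro HB. apply in_Bloch_mu_iff in HB. destruct HB as [M HM].
  assert (HM0 : 0 <= M).
  { specialize (HM 0 0 ltac:(lra)). pose proof (mu_pos _ (sqrt_sum_sqr_lt_1 0 0 ltac:(lra))).
    pose proof (Rabs_pos (u 0 0)).
    pose proof (sqrt_pos (du_dx 0 0 * du_dx 0 0 + du_dy 0 0 * du_dy 0 0)).
    nra. }
  destruct exists_class_step as [q [Hq Hqb]].
  exists (4 * INR q * M / B). intros N HN.
  assert (HNR : 1 <= INR N) by (apply (le_INR 1); auto).
  (* at radius r = 1 - 1 / (2N): r^N >= 1/2 and mu r >= B mu (1 - 1/N) *)
  set (r := 1 - 1 / INR N / 2).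
  assert (Hd : 0 < 1 / INR N <= 1)
    by (split; [apply Rdiv_lt_0_compat; lra |
                unfold Rdiv; rewrite Rmult_1_l, <- Rinv_1; apply Rinv_le_contravar; lra]).
  assert (Hr : 0 < r < 1) by (unfold r; lra).
  assert (Hmur : 0 < mu r) by (apply mu_pos; lra).
  assert (Hdb : mu r >= B * mu (1 - 1 / INR N)) by (apply mu_doub, Hd).
  assert (Hmu1 : 0 < mu (1 - 1 / INR N)) by (apply mu_pos; lra).
  assert (HrN : / 2 <= r ^ N).
  { pose proof (pow_one_minus_ge (1 / INR N / 2) N ltac:(lra)).
    replace (INR N * (1 / INR N / 2)) with (/ 2) in H by (field; lra). unfold r. lra. }
  pose proof (fun th => grad_le_on_circle mu M r th Hr Hmur HM) as HMr.
  eapply Rle_trans; [apply (low_sum_le_radial N r); lra|].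
  eapply Rle_trans;
    [apply Rmult_le_compat_l; [lra | apply (radial_sum_le r (M / mu r) Hr HMr q (S N) Hq Hqb)]|].
  replace (2 * (2 * INR q * (M / mu r))) with (4 * INR q * M * / mu r) by (field; lra).
  unfold Rdiv. rewrite (Rmult_assoc (4 * INR q * M)).
  apply Rmult_le_compat_l; [pose proof (pos_INR q); nra|].
  rewrite <- Rinv_mult. apply Rinv_le_contravar; [nra | lra].
Qed.
End GapSeries.
End Hadamard.

Theorem corollary6
  (mu : R -> R) (B lam : R) (n : nat -> nat) (ar ai : nat -> R)
  (u : R -> R -> R)
  (mu_pos : forall r, 0 <= r < 1 -> 0 < mu r)
  (mu_decr : forall r s, 0 <= r -> r <= s -> s < 1 -> mu s <= mu r)
  (mu_cont : forall r, 0 <= r < 1 ->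
     limit1_in mu (fun t => 0 <= t < 1) (mu r) r)
  (mu_lim : forall eps, eps > 0 -> exists delta, delta > 0 /\
     forall r, 1 - delta < r < 1 -> Rabs (mu r) < eps)
  (B_pos : B > 0)
  (mu_doub : forall d, 0 < d <= 1 -> mu (1 - d / 2) >= B * mu (1 - d))
  (lam_gt1 : lam > 1)
  (n_pos : (1 <= n 0)%nat)
  (n_gap : forall k, INR (n (S k)) >= lam * INR (n k))
  (conv_im : forall x y, x * x + y * y < 1 ->
     exists s, infinite_sum (fun k => im_term (ar (n k)) (ai (n k)) x y (n k)) s)
  (u_def : forall x y, x * x + y * y < 1 ->
     infinite_sum (fun k => re_term (ar (n k)) (ai (n k)) x y (n k)) (u x y)) :
  in_Bloch_mu mu u <->
  exists C : R, forall N : nat, (1 <= N)%nat ->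
    sum_f_R0 (fun k => if Nat.leb (n k) N
                       then INR (n k) * sqrt (ar (n k) ^ 2 + ai (n k) ^ 2)
                       else 0) N
    <= C / mu (1 - 1 / INR N).
Proof.
  split.
  - exact (low_sum_bound_of_in_Bloch lam n lam_gt1 n_pos n_gap ar ai u conv_im u_def
             mu B mu_pos B_pos mu_doub).
  - exact (in_Bloch_of_low_sum_bound lam n lam_gt1 n_pos n_gap ar ai u conv_im u_def
             mu B mu_pos mu_decr B_pos mu_doub).
Qed.
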